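(* Let $\gamma\in\Phi_l$, $x\in\mathfrak g_s$ and $\lambda\in\bar{\mathbb F}_2$. Then the element $x+\lambda X_\gamma\in\mathfrak g$ (under the adjoint action) and the element $x+\lambda v_\gamma\in V$ have the same stabilizer in $G$, where $x$ is regarded as an element of $V$ via $\mathfrak g_s\subset V$.
   Context: Let $G=F_4(\bar{\mathbb F}_2)$, $\Phi=\Phi_s\sqcup\Phi_l$ its roots (short/long), and fix a Chevalley basis $\{X_\alpha,H_{\alpha_i}\}$ of the adjoint representation $\mathfrak g$. Let $\mathfrak g_s\subset\mathfrak g$ be the $G$-stable span of $H_{\alpha_3},H_{\alpha_4}$ ($\alpha_3,\alpha_4$ the short simple roots) and $X_\alpha$, $\alpha\in\Phi_s$; $V:=\mathfrak g_s\oplus\mathfrak g/\mathfrak g_s$, and $v_\gamma\in V_\gamma\cong\mathfrak g_\gamma$ is the element corresponding to $X_\gamma$ (for $\gamma$ long, $v_\gamma$ is the image of $X_\gamma$ in $\mathfrak g/\mathfrak g_s$). *)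

(* The adjoint Chevalley group F_4(k) over k = \bar F_2, realized
   concretely as 52x52 matrices acting on the Chevalley basis of g = Lie(F_4). *)
From HB Require Import structures.
From mathcomp Require Import all_boot all_order all_algebra.
Set Implicit Arguments. Unset Strict Implicit. Unset Printing Implicit Defensive.
Import Order.TTheory GRing.Theory Num.Theory.
Local Open Scope ring_scope.

(** * Root system of F_4 (Bourbaki numbering: alpha_1, alpha_2 long, alpha_3, alpha_4 short).
    Roots are coordinate vectors (length 4) w.r.t. the simple roots. *)

Definition vadd (a b : seq int) : seq int := [seq x.1 + x.2 | x <- zip a b].
Definition vscale (c : int) (a : seq int) : seq int := [seq c * x | x <- a].
Definition vsub (a b : seq int) : seq int := vadd a (vscale (-1) b).

(* twice the W-invariant form: (a_i,a_i) = 2 for long, 1 for short simple roots *)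
Definition Bmat : seq (seq int) :=
  [:: [:: 4; -2; 0; 0]; [:: -2; 4; -2; 0]; [:: 0; -2; 2; -1]; [:: 0; 0; -1; 2]].
Definition Bf (a b : seq int) : int :=
  foldr +%R 0 [seq a`_i * (nth [::] Bmat i)`_j * b`_j | i <- iota 0 4, j <- iota 0 4].

Definition simpleRoot (m : nat) : seq int := [seq (i == m)%:Z | i <- iota 0 4].

Definition posShort : seq (seq int) :=
  [:: [:: 0; 0; 0; 1]; [:: 0; 0; 1; 0]; [:: 0; 0; 1; 1]; [:: 0; 1; 1; 0];
      [:: 0; 1; 1; 1]; [:: 1; 1; 1; 0]; [:: 0; 1; 2; 1]; [:: 1; 1; 1; 1];
      [:: 1; 1; 2; 1]; [:: 1; 2; 2; 1]; [:: 1; 2; 3; 1]; [:: 1; 2; 3; 2]].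
Definition posLong : seq (seq int) :=
  [:: [:: 0; 1; 0; 0]; [:: 1; 0; 0; 0]; [:: 1; 1; 0; 0]; [:: 0; 1; 2; 0];
      [:: 1; 1; 2; 0]; [:: 0; 1; 2; 2]; [:: 1; 2; 2; 0]; [:: 1; 1; 2; 2];
      [:: 1; 2; 2; 2]; [:: 1; 2; 4; 2]; [:: 1; 3; 4; 2]; [:: 2; 3; 4; 2]].

Definition shortRoots : seq (seq int) := posShort ++ map (vscale (-1)) posShort.
Definition longRoots : seq (seq int) := posLong ++ map (vscale (-1)) posLong.
Definition F4roots : seq (seq int) := shortRoots ++ longRoots.
Definition isRoot (a : seq int) : bool := a \in F4roots.

(* p(alpha,beta) = largest p >= 0 with beta - p alpha a root (strings have length <= 3 in F_4) *)
Fixpoint pstr_aux (fuel : nat) (a b : seq int) : nat :=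
  if fuel is n.+1 then
    (if isRoot (vsub b a) then (pstr_aux n a (vsub b a)).+1 else 0%N)
  else 0%N.
Definition pstr (a b : seq int) : nat := pstr_aux 4 a b.

Definition cartan (b : seq int) (m : nat) : int :=
  ((2 * Bf b (simpleRoot m)) %/ Bf (simpleRoot m) (simpleRoot m))%Z.
(* coefficient of alpha_m^vee in alpha^vee = 2 alpha/(alpha,alpha) *)
Definition corootCoef (a : seq int) (m : nat) : int :=
  ((a`_m * Bf (simpleRoot m) (simpleRoot m)) %/ Bf a a)%Z.

(** * The Chevalley basis of g, indexed by 'I_52.
    0,1   : H_{alpha_3}, H_{alpha_4}
    2..25 : X_alpha, alpha short (in the order of shortRoots)
    --- indices 0..25 span g_s ---
    26,27 : H_{alpha_1}, H_{alpha_2}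
    28..51: X_alpha, alpha long (in the order of longRoots) *)

Definition dimg : nat := 52.
Definition dims : nat := 26.

Definition basisRoot (i : nat) : option (seq int) :=
  if (i < 2)%N then None
  else if (i < 26)%N then Some (nth [::] shortRoots (i - 2))
  else if (i < 28)%N then None
  else if (i < 52)%N then Some (nth [::] longRoots (i - 28))
  else None.

(* index m (0-based simple root number) of the basis element H_{alpha_m} *)
Definition basisH (i : nat) : option nat :=
  if i == 0%N then Some 2%N else if i == 1%N then Some 3%N
  else if i == 26%N then Some 0%N else if i == 27%N then Some 1%N else None.

Definition rootIdx (a : seq int) : nat :=
  if a \in shortRoots then (2 + index a shortRoots)%N else (28 + index a longRoots)%N.

(* Integer structure constants: coefficient of e_i in [X_alpha, e_j].
   Signs of the N_{alpha,beta} = +-(p+1) are irrelevant in characteristic 2. *)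
Definition adCoef (a : seq int) (i j : nat) : int :=
  match basisRoot j with
  | Some b =>
      if b == vscale (-1) a then
        (if basisH i is Some m then corootCoef a m else 0)          (* [X_a,X_-a] = H_a *)
      else if isRoot (vadd a b) then
        (if i == rootIdx (vadd a b) then (pstr a b).+1%:Z else 0)   (* N_{a,b} X_{a+b} *)
      else 0
  | None =>
      match basisH j with
      | Some m => if i == rootIdx a then - cartan a m else 0          (* [X_a,H_m] *)
      | None => 0
      end
  end.

(* Coefficient of e_i in ((ad X_alpha)^2 / 2) e_j, computed over Z. *)
Definition ad2Coef (a : seq int) (i j : nat) : int :=
  match basisRoot j with
  | Some b =>
      if b == vscale (-1) a then (if i == rootIdx a then -1 else 0)
      else if isRoot (vadd a b) && isRoot (vadd a (vadd a b)) then
        (if i == rootIdx (vadd a (vadd a b)) then ('C((pstr a b).+2, 2))%:Z else 0)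
      else 0
  | None => 0
  end.

Section Chevalley.
Variable k : fieldType.

Definition adX (a : seq int) : 'M[k]_dimg := \matrix_(i, j) (adCoef a i j)%:~R.
Definition ad2X (a : seq int) : 'M[k]_dimg := \matrix_(i, j) (ad2Coef a i j)%:~R.

(* root element x_alpha(t) = exp(t ad X_alpha) acting on g (divided powers stop at 2) *)
Definition xroot (a : seq int) (t : k) : 'M[k]_dimg :=
  1%:M + t *: adX a + t ^+ 2 *: ad2X a.

Inductive inG : 'M[k]_dimg -> Prop :=
  | inG1 : inG 1%:M
  | inGmul (a : seq int) (t : k) (g : 'M[k]_dimg) :
      a \in F4roots -> inG g -> inG (xroot a t *m g).

Definition in_gs (x : 'cV[k]_dimg) : Prop := forall i : 'I_dimg, (dims <= i)%N -> x i 0 = 0.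

Definition Xv (a : seq int) : 'cV[k]_dimg := \col_(i < dimg) (i == rootIdx a :> nat)%:R.

(** V = g_s (+) g/g_s, with basis: indices 0..25 the basis of g_s, indices 26..51
    the images in g/g_s of the basis vectors 26..51 of g. The action of g in G on V
    is block-diagonal: its restriction to g_s and the induced action on g/g_s. *)
Definition actV (g : 'M[k]_dimg) : 'M[k]_dimg :=
  \matrix_(i, j) (if (i < dims)%N == (j < dims)%N then g i j else 0).

Definition gs_to_V (x : 'cV[k]_dimg) : 'cV[k]_dimg :=
  \col_(i < dimg) (if (i < dims)%N then x i 0 else 0).

Definition vV (a : seq int) : 'cV[k]_dimg := \col_(i < dimg) (i == rootIdx a :> nat)%:R.

Definition stab_g (w : 'cV[k]_dimg) (g : 'M[k]_dimg) : Prop := inG g /\ g *m w = w.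
Definition stab_V (w : 'cV[k]_dimg) (g : 'M[k]_dimg) : Prop := inG g /\ actV g *m w = w.

End Chevalley.

From HB Require Import structures.
From mathcomp Require Import all_boot all_order all_algebra.
Import GRing.Theory.
Local Open Scope ring_scope.

(* Over a field of characteristic 2 (the only property of k that is used), the
   G-orbit of a long root vector X_gamma lies on the 53 quadrics [quadrics] in the
   coordinates of the Chevalley basis: X_gamma lies on all of them, and every root
   element x_alpha(t) transforms each quadric into a combination of quadrics with
   coefficients powers of t, as certified by [quadric_certs] and checked over F_2
   by computation. For each basis index i of g_s the i-th quadric is v_i^2 + q_i,
   where q_i only involves coordinates of g/g_s and not the square of the
   X_gamma-coordinate. Hence g X_gamma = X_gamma mod g_s forces g X_gamma = X_gamma.
   As G preserves g_s, g acts on x + lam X_gamma in V as in g up to lam times the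
   g_s-part of g X_gamma, and either stabilizer condition kills that defect. *)

(* Symbolic sums over F_2 in variables v_0, v_1, ... and a parameter t: in a [tlin]
   the pair (j, d) stands for t^d v_j, in a [quad] (i, j) for v_i v_j, and in a
   [tquad] (d, (i, j)) for t^d v_i v_j. *)
Definition tlin := seq (nat * nat).
Definition quad := seq (nat * nat).
Definition tquad := seq (nat * (nat * nat)).

Definition eval_tlin {R : nzSemiRingType} (t : R) (v : nat -> R) (l : tlin) : R :=
  \sum_(u <- l) t ^+ u.2 * v u.1.
Definition eval_quad {R : nzSemiRingType} (v : nat -> R) (f : quad) : R :=
  \sum_(p <- f) v p.1 * v p.2.
Definition eval_tquad {R : nzSemiRingType} (t : R) (v : nat -> R) (s : tquad) : R :=
  \sum_(u <- s) t ^+ u.1 * (v u.2.1 * v u.2.2).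

Definition tlin_mul (l1 l2 : tlin) : tquad :=
  [seq ((u.2 + w.2)%N, (minn u.1 w.1, maxn u.1 w.1)) | u <- l1, w <- l2].

Definition quad_subst (rows : seq tlin) (f : quad) : tquad :=
  flatten [seq tlin_mul (nth [::] rows p.1) (nth [::] rows p.2) | p <- f].

Definition quad_comb (qs : seq quad) (cert : seq (nat * nat)) : tquad :=
  flatten [seq [seq (c.1, p) | p <- nth [::] qs c.2] | c <- cert].

Definition tmono_le (x y : nat * (nat * nat)) : bool :=
  (x.1 < y.1)%N || (x.1 == y.1) &&
  ((x.2.1 < y.2.1)%N || (x.2.1 == y.2.1) && (x.2.2 <= y.2.2)%N).

Fixpoint cancel_pairs (s : tquad) : tquad :=
  if s is x :: r then
    if cancel_pairs r is y :: r' then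
      (if x == y then r' else x :: y :: r')
    else [:: x]
  else [::].

Definition tquad_norm (s : tquad) : tquad := cancel_pairs (sort tmono_le s).

Section Evaluation.

Variables (R : comNzRingType) (t : R) (v : nat -> R).

Lemma eval_tquad_cat s1 s2 :
  eval_tquad t v (s1 ++ s2) = eval_tquad t v s1 + eval_tquad t v s2.
Proof. exact: big_cat. Qed.

Lemma eval_tlin_mul l1 l2 :
  eval_tquad t v (tlin_mul l1 l2) = eval_tlin t v l1 * eval_tlin t v l2.
Proof.
rewrite /eval_tquad big_allpairs_dep big_distrl /=; apply: eq_bigr => u _.
rewrite big_distrr /=; apply: eq_bigr => w _; rewrite exprD.
by case: leqP => _; rewrite -?[v w.1 * _]mulrC mulrACA.
Qed.

Lemma eval_quad_subst rows f :
  eval_tquad t v (quad_subst rows f) =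
  eval_quad (fun j => eval_tlin t v (nth [::] rows j)) f.
Proof.
elim: f => [|p f IH]; first by rewrite /eval_tquad /eval_quad !big_nil.
by rewrite /quad_subst /= eval_tquad_cat -/(quad_subst rows f) IH eval_tlin_mul
  /eval_quad big_cons.
Qed.

Lemma eval_quad_comb qs cert :
  eval_tquad t v (quad_comb qs cert) =
  \sum_(c <- cert) t ^+ c.1 * eval_quad v (nth [::] qs c.2).
Proof.
elim: cert => [|c cert IH]; first by rewrite /eval_tquad !big_nil.
rewrite /quad_comb /= eval_tquad_cat -/(quad_comb qs cert) IH big_cons.
by rewrite /eval_tquad /eval_quad big_map big_distrr.
Qed.

Hypothesis char2 : (2 \in [pchar R])%N.

Lemma eval_cancel_pairs s : eval_tquad t v (cancel_pairs s) = eval_tquad t v s.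
Proof.
elim: s => [|x s IH] //=; rewrite /eval_tquad big_cons -/(eval_tquad t v s) -IH.
case: (cancel_pairs s) => [|y r]; first by rewrite /eval_tquad big_seq1 big_nil addr0.
case: eqP => [<-|_]; last by rewrite /eval_tquad !big_cons.
by rewrite /eval_tquad big_cons addrA (addrr_pchar2 char2) add0r.
Qed.

Lemma eval_tquad_norm s : eval_tquad t v (tquad_norm s) = eval_tquad t v s.
Proof. by rewrite eval_cancel_pairs; apply: perm_big; rewrite perm_sort. Qed.

End Evaluation.

Lemma eval_quad_delta (R : nzSemiRingType) (D : pred nat) (v : nat -> R) r f :
  (forall j, D j -> v j = (j == r)%:R) -> all (fun p => D p.1 && D p.2) f ->
  (r, r) \notin f -> eval_quad v f = 0.
Proof.
move=> vD /allP fD rf; rewrite /eval_quad big1_seq // => -[i j] /andP[_ ijf].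
have /andP[Di Dj] := fD _ ijf; rewrite !vD //=.
case: (eqVneq i r) => [ir|]; last by rewrite mul0r.
case: (eqVneq j r) => [jr|]; last by rewrite mulr0.
by subst; rewrite ijf in rf.
Qed.

Lemma all2_exists {T1 : eqType} {T2 : Type} {r : T1 -> T2 -> bool} {s1 s2 x} :
  all2 r s1 s2 -> x \in s1 -> exists y, r x y.
Proof.
elim: s1 s2 => [|x1 s1 IH] [|x2 s2] //= /andP[r12 rs].
by rewrite inE => /predU1P[->|xs1]; [exists x2 | exact: IH rs xs1].
Qed.

Section BlockDiagonalStabilizer.

Context {F : fieldType} {n : nat} {P g : 'M[F]_n} {x X : 'cV[F]_n} {lam : F}.
Let Q := 1%:M - P.
Hypotheses (P_idem : P *m P = P) (Px : P *m x = x) (PX : P *m X = 0).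
Hypotheses (Pgx : P *m (g *m x) = g *m x) (PgX : Q *m (g *m X) = X -> P *m (g *m X) = 0).

Lemma stab_block_diag :
  g *m (x + lam *: X) = x + lam *: X <->
  (P *m g *m P + Q *m g *m Q) *m (x + lam *: X) = x + lam *: X.
Proof.
set w := x + lam *: X; set y := g *m X; set A := _ + _.
have QP : Q *m P = 0 by rewrite mulmxBl mul1mx P_idem subrr.
have Q_idem : Q *m Q = Q by rewrite {2}/Q mulmxBr mulmx1 QP subr0.
have Pw : P *m w = x by rewrite mulmxDr -scalemxAr PX scaler0 addr0 Px.
have Qw : Q *m w = lam *: X by rewrite mulmxBl mul1mx Pw addrC addKr.
have Qgx : Q *m (g *m x) = 0 by rewrite -Pgx mulmxA QP mul0mx.
have PQy : P *m y + Q *m y = y by rewrite -mulmxDl /Q addrC subrK mul1mx.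
have gw : g *m w = g *m x + lam *: (P *m y) + lam *: (Q *m y).
  by rewrite -addrA -scalerDr PQy mulmxDr scalemxAr.
have Aw : A *m w = g *m x + lam *: (Q *m y).
  by rewrite mulmxDl -!mulmxA Pw Qw Pgx -!scalemxAr.
have Q_gw : Q *m (g *m w) = lam *: (Q *m y).
  by rewrite gw !mulmxDr Qgx -!scalemxAr mulmxA QP mul0mx mulmxA Q_idem scaler0 !add0r.
have Q_Aw : Q *m (A *m w) = lam *: (Q *m y).
  by rewrite Aw mulmxDr Qgx -scalemxAr mulmxA Q_idem add0r.
have defect0 : lam *: (Q *m y) = lam *: X -> lam *: (P *m y) = 0.
  have [->|lam0] := eqVneq lam 0; first by rewrite !scale0r.
  by move=> /(scalerI lam0) /PgX ->; rewrite scaler0.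
have gwAw : lam *: (P *m y) = 0 -> g *m w = A *m w by rewrite gw Aw => ->; rewrite addr0.
split=> fixw.
- by rewrite -gwAw // defect0 // -Q_gw fixw Qw.
- by rewrite gwAw // defect0 // -Q_Aw fixw Qw.
Qed.

End BlockDiagonalStabilizer.

Definition oddz (z : int) : bool := odd `|z|%N.

Lemma intr_pchar2 (R : nzRingType) (z : int) :
  (2 \in [pchar R])%N -> z%:~R = (oddz z)%:R :> R.
Proof.
move=> char2; rewrite {1}[z]intEsign rmorphM rmorphXn /= rmorphN1.
rewrite (oppr_pchar2 char2) expr1n mul1r /oddz -[in LHS](odd_double_half `|z|%N).
by rewrite -pmulrn natrD -muln2 natrM (pcharf0 char2) mulr0 addr0.
Qed.

Definition cvnth {R : nmodType} (v : 'cV[R]_dimg) (j : nat) : R :=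
  if insub j is Some i then v i 0 else 0.

Lemma cvnthE {R : nmodType} (v : 'cV[R]_dimg) (i : 'I_dimg) : cvnth v i = v i 0.
Proof. by rewrite /cvnth valK. Qed.

Lemma cvnth_out {R : nmodType} (v : 'cV[R]_dimg) j : (dimg <= j)%N -> cvnth v j = 0.
Proof. by move=> jge; rewrite /cvnth insubF // ltnNge jge. Qed.

Definition xroot_row (a : seq int) (i : nat) : tlin :=
  (i, 0%N) :: [seq (j, 1%N) | j <- iota 0 dimg & oddz (adCoef a i j)]
           ++ [seq (j, 2%N) | j <- iota 0 dimg & oddz (ad2Coef a i j)].

Definition xroot_rows (a : seq int) : seq tlin := [seq xroot_row a i | i <- iota 0 dimg].

Lemma eval_tlin_row (R : comNzRingType) (t : R) (w : nat -> R) i s (P Q : pred nat) :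
  eval_tlin t w ((i, 0%N) :: [seq (j, 1%N) | j <- s & P j] ++ [seq (j, 2%N) | j <- s & Q j])
  = w i + t * \sum_(j <- s | P j) w j + t ^+ 2 * \sum_(j <- s | Q j) w j.
Proof.
by rewrite /eval_tlin big_cons big_cat !big_map !big_filter /= mul1r expr1 !big_distrr addrA.
Qed.

Definition quadrics : seq quad :=
  [:: [:: (0, 0); (31, 43); (32, 44); (33, 45); (34, 46); (35, 47); (36, 48)];
      [:: (1, 1); (26, 26); (26, 27); (27, 27); (28, 40); (29, 41); (30, 42); (31, 43); (32, 44); (34, 46)];
      [:: (2, 2); (33, 43); (35, 44); (36, 46)];
      [:: (3, 3); (31, 40); (32, 42); (37, 48)];
      [:: (4, 4); (33, 40); (35, 42); (37, 46)];
      [:: (5, 5); (28, 31); (34, 41); (38, 47)];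
      [:: (6, 6); (28, 33); (36, 41); (38, 44)];
      [:: (7, 7); (29, 34); (30, 32); (39, 45)];
      [:: (8, 8); (31, 33); (37, 41); (38, 42)];
      [:: (9, 9); (29, 36); (30, 35); (39, 43)];
      [:: (10, 10); (29, 37); (32, 35); (39, 40)];
      [:: (11, 11); (28, 39); (30, 38); (34, 36)];
      [:: (12, 12); (31, 39); (32, 38); (34, 37)];
      [:: (13, 13); (33, 39); (35, 38); (36, 37)];
      [:: (14, 14); (31, 45); (32, 47); (34, 48)];
      [:: (15, 15); (28, 43); (30, 44); (36, 49)];
      [:: (16, 16); (28, 45); (30, 47); (34, 49)];
      [:: (17, 17); (29, 46); (35, 50); (40, 43)];
      [:: (18, 18); (29, 48); (32, 50); (40, 45)];
      [:: (19, 19); (33, 51); (41, 46); (42, 44)];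
      [:: (20, 20); (29, 49); (30, 50); (43, 45)];
      [:: (21, 21); (31, 51); (41, 48); (42, 47)];
      [:: (22, 22); (28, 51); (41, 49); (44, 47)];
      [:: (23, 23); (40, 51); (42, 50); (46, 48)];
      [:: (24, 24); (43, 51); (44, 50); (46, 49)];
      [:: (25, 25); (45, 51); (47, 50); (48, 49)];
      [:: (26, 43); (29, 44); (30, 46); (35, 49); (36, 50)];
      [:: (26, 44); (27, 44); (28, 46); (33, 49); (36, 51); (41, 43)];
      [:: (26, 45); (29, 47); (30, 48); (32, 49); (34, 50)];
      [:: (27, 46); (33, 50); (35, 51); (40, 44); (42, 43)];
      [:: (26, 47); (27, 47); (28, 48); (31, 49); (34, 51); (41, 45)];
      [:: (27, 48); (31, 50); (32, 51); (40, 47); (42, 45)];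
      [:: (26, 31); (32, 41); (34, 42); (37, 47); (38, 48)];
      [:: (26, 32); (27, 32); (29, 31); (34, 40); (37, 45); (39, 48)];
      [:: (26, 33); (35, 41); (36, 42); (37, 44); (38, 46)];
      [:: (27, 34); (28, 32); (30, 31); (38, 45); (39, 47)];
      [:: (26, 35); (27, 35); (29, 33); (36, 40); (37, 43); (39, 46)];
      [:: (27, 36); (28, 35); (30, 33); (38, 43); (39, 44)];
      [:: (27, 49); (28, 50); (30, 51); (43, 47); (44, 45)];
      [:: (26, 50); (27, 50); (29, 51); (40, 49); (43, 48); (45, 46)];
      [:: (26, 51); (41, 50); (42, 49); (44, 48); (46, 47)];
      [:: (27, 37); (31, 35); (32, 33); (38, 40); (39, 42)];
      [:: (26, 38); (27, 38); (28, 37); (31, 36); (33, 34); (39, 41)];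
      [:: (26, 39); (29, 38); (30, 37); (32, 36); (34, 35)];
      [:: (1, 1); (27, 27); (28, 40); (30, 42); (31, 43); (32, 44); (36, 48); (37, 49)];
      [:: (26, 40); (29, 42); (32, 46); (35, 48); (37, 50)];
      [:: (26, 42); (27, 42); (31, 46); (33, 48); (37, 51); (40, 41)];
      [:: (1, 1); (26, 26); (27, 27); (28, 40); (29, 41); (31, 43); (34, 46); (35, 47); (38, 50)];
      [:: (26, 28); (30, 41); (34, 44); (36, 47); (38, 49)];
      [:: (27, 41); (28, 42); (31, 44); (33, 47); (38, 51)];
      [:: (1, 1); (26, 26); (29, 41); (30, 42); (32, 44); (33, 45); (34, 46); (39, 51)];
      [:: (26, 30); (27, 30); (28, 29); (34, 43); (36, 45); (39, 49)];
      [:: (27, 29); (30, 40); (32, 43); (35, 45); (39, 50)]].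

(* Entry n of row r lists pairs (d, m) such that the n-th quadric composed with
   x_alpha(t), alpha the r-th root of [F4roots], is the sum of the t^d-multiples
   of the m-th quadrics. *)
Definition quadric_certs : seq (seq (seq (nat * nat))) :=
  [:: [:: [:: (0, 0)]; [:: (0, 1); (2, 14)]; [:: (0, 2); (2, 0); (4, 14)]; [:: (0, 3)]; [:: (0, 4); (2, 3)]; [:: (0, 5)]; [:: (0, 6); (2, 5)]; [:: (0, 7)]; [:: (0, 8)]; [:: (0, 9); (2, 7)]; [:: (0, 10)]; [:: (0, 11)]; [:: (0, 12)]; [:: (0, 13); (2, 12)]; [:: (0, 14)]; [:: (0, 15); (2, 16)]; [:: (0, 16)]; [:: (0, 17); (2, 18)]; [:: (0, 18)]; [:: (0, 19); (2, 21)]; [:: (0, 20)]; [:: (0, 21)]; [:: (0, 22)]; [:: (0, 23)]; [:: (0, 24); (2, 25)]; [:: (0, 25)]; [:: (0, 26); (2, 28)]; [:: (0, 27); (2, 30)]; [:: (0, 28)]; [:: (0, 29); (2, 31)]; [:: (0, 30)]; [:: (0, 31)]; [:: (0, 32)]; [:: (0, 33)]; [:: (0, 34); (2, 32)]; [:: (0, 35)]; [:: (0, 36); (2, 33)]; [:: (0, 37); (2, 35)]; [:: (0, 38)]; [:: (0, 39)]; [:: (0, 40)]; [:: (0, 41)]; [:: (0, 42)]; [:: (0, 43)]; [:: (0, 44); (2, 14)]; [:: (0, 45)]; [:: (0, 46)]; [:: (0, 47); (2, 14)]; [:: (0, 48)]; [:: (0, 49)]; [:: (0, 50); (2, 14)];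 [:: (0, 51)]; [:: (0, 52)]];
      [:: [:: (0, 0); (2, 15)]; [:: (0, 1)]; [:: (0, 2)]; [:: (0, 3); (2, 44); (4, 15)]; [:: (0, 4); (2, 2)]; [:: (0, 5)]; [:: (0, 6)]; [:: (0, 7)]; [:: (0, 8); (2, 6)]; [:: (0, 9)]; [:: (0, 10); (2, 9)]; [:: (0, 11)]; [:: (0, 12); (2, 11)]; [:: (0, 13)]; [:: (0, 14); (2, 16)]; [:: (0, 15)]; [:: (0, 16)]; [:: (0, 17)]; [:: (0, 18); (2, 20)]; [:: (0, 19)]; [:: (0, 20)]; [:: (0, 21); (2, 22)]; [:: (0, 22)]; [:: (0, 23); (2, 24)]; [:: (0, 24)]; [:: (0, 25)]; [:: (0, 26)]; [:: (0, 27)]; [:: (0, 28)]; [:: (0, 29)]; [:: (0, 30)]; [:: (0, 31); (2, 38)]; [:: (0, 32); (2, 48)]; [:: (0, 33); (2, 51)]; [:: (0, 34)]; [:: (0, 35)]; [:: (0, 36)]; [:: (0, 37)]; [:: (0, 38)]; [:: (0, 39)]; [:: (0, 40)]; [:: (0, 41); (2, 37)]; [:: (0, 42)]; [:: (0, 43)]; [:: (0, 44)]; [:: (0, 45); (2, 26)]; [:: (0, 46); (2, 27)]; [:: (0, 47)]; [:: (0, 48)]; [:: (0, 49)]; [:: (0, 50)]; [:: (0, 51)]; [:: (0, 52)]];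
      [:: [:: (0, 0); (2, 16)]; [:: (0, 1); (2, 16)]; [:: (0, 2); (2, 15)]; [:: (0, 3); (2, 14)]; [:: (0, 4); (2, 0); (2, 44); (4, 16)]; [:: (0, 5)]; [:: (0, 6)]; [:: (0, 7)]; [:: (0, 8); (2, 5)]; [:: (0, 9)]; [:: (0, 10); (2, 7)]; [:: (0, 11)]; [:: (0, 12)]; [:: (0, 13); (2, 11)]; [:: (0, 14)]; [:: (0, 15)]; [:: (0, 16)]; [:: (0, 17); (2, 20)]; [:: (0, 18)]; [:: (0, 19); (2, 22)]; [:: (0, 20)]; [:: (0, 21)]; [:: (0, 22)]; [:: (0, 23); (2, 25)]; [:: (0, 24)]; [:: (0, 25)]; [:: (0, 26)]; [:: (0, 27)]; [:: (0, 28)]; [:: (0, 29); (2, 38)]; [:: (0, 30)]; [:: (0, 31)]; [:: (0, 32)]; [:: (0, 33)]; [:: (0, 34); (2, 48)]; [:: (0, 35)]; [:: (0, 36); (2, 51)]; [:: (0, 37)]; [:: (0, 38)]; [:: (0, 39)]; [:: (0, 40)]; [:: (0, 41); (2, 35)]; [:: (0, 42)]; [:: (0, 43)]; [:: (0, 44); (2, 16)]; [:: (0, 45); (2, 28)]; [:: (0, 46); (2, 30)]; [:: (0, 47); (2, 16)]; [:: (0, 48)]; [:: (0, 49)]; [:: (0, 50); (2, 16)]; [:: (0, 51)]; [:: (0, 52)]];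
      [:: [:: (0, 0); (2, 17)]; [:: (0, 1)]; [:: (0, 2)]; [:: (0, 3)]; [:: (0, 4)]; [:: (0, 5); (2, 47); (4, 17)]; [:: (0, 6); (2, 2)]; [:: (0, 7)]; [:: (0, 8); (2, 4)]; [:: (0, 9)]; [:: (0, 10)]; [:: (0, 11); (2, 9)]; [:: (0, 12); (2, 10)]; [:: (0, 13)]; [:: (0, 14); (2, 18)]; [:: (0, 15)]; [:: (0, 16); (2, 20)]; [:: (0, 17)]; [:: (0, 18)]; [:: (0, 19)]; [:: (0, 20)]; [:: (0, 21); (2, 23)]; [:: (0, 22); (2, 24)]; [:: (0, 23)]; [:: (0, 24)]; [:: (0, 25)]; [:: (0, 26)]; [:: (0, 27)]; [:: (0, 28)]; [:: (0, 29)]; [:: (0, 30); (2, 39)]; [:: (0, 31)]; [:: (0, 32); (2, 45)]; [:: (0, 33)]; [:: (0, 34)]; [:: (0, 35); (2, 52)]; [:: (0, 36)]; [:: (0, 37)]; [:: (0, 38)]; [:: (0, 39)]; [:: (0, 40)]; [:: (0, 41)]; [:: (0, 42); (2, 36)]; [:: (0, 43)]; [:: (0, 44)]; [:: (0, 45)]; [:: (0, 46)]; [:: (0, 47)]; [:: (0, 48); (2, 26)]; [:: (0, 49); (2, 29)]; [:: (0, 50)]; [:: (0, 51)]; [:: (0, 52)]];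
      [:: [:: (0, 0); (2, 18)]; [:: (0, 1); (2, 18)]; [:: (0, 2); (2, 17)]; [:: (0, 3)]; [:: (0, 4)]; [:: (0, 5); (2, 14)]; [:: (0, 6); (2, 0); (2, 47); (4, 18)]; [:: (0, 7)]; [:: (0, 8); (2, 3)]; [:: (0, 9)]; [:: (0, 10)]; [:: (0, 11); (2, 7)]; [:: (0, 12)]; [:: (0, 13); (2, 10)]; [:: (0, 14)]; [:: (0, 15); (2, 20)]; [:: (0, 16)]; [:: (0, 17)]; [:: (0, 18)]; [:: (0, 19); (2, 23)]; [:: (0, 20)]; [:: (0, 21)]; [:: (0, 22); (2, 25)]; [:: (0, 23)]; [:: (0, 24)]; [:: (0, 25)]; [:: (0, 26)]; [:: (0, 27); (2, 39)]; [:: (0, 28)]; [:: (0, 29)]; [:: (0, 30)]; [:: (0, 31)]; [:: (0, 32)]; [:: (0, 33)]; [:: (0, 34); (2, 45)]; [:: (0, 35)]; [:: (0, 36)]; [:: (0, 37); (2, 52)]; [:: (0, 38)]; [:: (0, 39)]; [:: (0, 40)]; [:: (0, 41)]; [:: (0, 42); (2, 33)]; [:: (0, 43)]; [:: (0, 44); (2, 18)]; [:: (0, 45)]; [:: (0, 46)]; [:: (0, 47); (2, 18)]; [:: (0, 48); (2, 28)]; [:: (0, 49); (2, 31)]; [:: (0, 50); (2, 18)]; [:: (0, 51)]; [:: (0, 52)]];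
      [:: [:: (0, 0); (2, 19)]; [:: (0, 1)]; [:: (0, 2)]; [:: (0, 3)]; [:: (0, 4)]; [:: (0, 5)]; [:: (0, 6)]; [:: (0, 7); (2, 50); (4, 19)]; [:: (0, 8)]; [:: (0, 9); (2, 2)]; [:: (0, 10); (2, 4)]; [:: (0, 11); (2, 6)]; [:: (0, 12); (2, 8)]; [:: (0, 13)]; [:: (0, 14); (2, 21)]; [:: (0, 15)]; [:: (0, 16); (2, 22)]; [:: (0, 17)]; [:: (0, 18); (2, 23)]; [:: (0, 19)]; [:: (0, 20); (2, 24)]; [:: (0, 21)]; [:: (0, 22)]; [:: (0, 23)]; [:: (0, 24)]; [:: (0, 25)]; [:: (0, 26)]; [:: (0, 27)]; [:: (0, 28); (2, 40)]; [:: (0, 29)]; [:: (0, 30)]; [:: (0, 31)]; [:: (0, 32)]; [:: (0, 33); (2, 46)]; [:: (0, 34)]; [:: (0, 35); (2, 49)]; [:: (0, 36)]; [:: (0, 37)]; [:: (0, 38)]; [:: (0, 39)]; [:: (0, 40)]; [:: (0, 41)]; [:: (0, 42)]; [:: (0, 43); (2, 34)]; [:: (0, 44)]; [:: (0, 45)]; [:: (0, 46)]; [:: (0, 47)]; [:: (0, 48)]; [:: (0, 49)]; [:: (0, 50)]; [:: (0, 51); (2, 27)]; [:: (0, 52); (2, 29)]];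
      [:: [:: (0, 0)]; [:: (0, 1); (2, 20)]; [:: (0, 2)]; [:: (0, 3); (2, 18)]; [:: (0, 4); (2, 17)]; [:: (0, 5); (2, 16)]; [:: (0, 6); (2, 15)]; [:: (0, 7)]; [:: (0, 8); (2, 0); (2, 44); (2, 47); (4, 20)]; [:: (0, 9)]; [:: (0, 10)]; [:: (0, 11)]; [:: (0, 12); (2, 7)]; [:: (0, 13); (2, 9)]; [:: (0, 14)]; [:: (0, 15)]; [:: (0, 16)]; [:: (0, 17)]; [:: (0, 18)]; [:: (0, 19); (2, 24)]; [:: (0, 20)]; [:: (0, 21); (2, 25)]; [:: (0, 22)]; [:: (0, 23)]; [:: (0, 24)]; [:: (0, 25)]; [:: (0, 26)]; [:: (0, 27)]; [:: (0, 28)]; [:: (0, 29)]; [:: (0, 30)]; [:: (0, 31)]; [:: (0, 32); (2, 28)]; [:: (0, 33)]; [:: (0, 34); (2, 26)]; [:: (0, 35)]; [:: (0, 36)]; [:: (0, 37)]; [:: (0, 38)]; [:: (0, 39)]; [:: (0, 40)]; [:: (0, 41); (2, 52)]; [:: (0, 42); (2, 51)]; [:: (0, 43)]; [:: (0, 44); (2, 20)]; [:: (0, 45)]; [:: (0, 46); (2, 39)]; [:: (0, 47); (2, 20)]; [:: (0, 48)]; [:: (0, 49); (2, 38)]; [:: (0, 50); (2, 20)]; [:: (0, 51)]; [:: (0, 52)]];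
      [:: [:: (0, 0); (2, 21)]; [:: (0, 1); (2, 21)]; [:: (0, 2); (2, 19)]; [:: (0, 3)]; [:: (0, 4)]; [:: (0, 5)]; [:: (0, 6)]; [:: (0, 7); (2, 14)]; [:: (0, 8)]; [:: (0, 9); (2, 0); (2, 50); (4, 21)]; [:: (0, 10); (2, 3)]; [:: (0, 11); (2, 5)]; [:: (0, 12)]; [:: (0, 13); (2, 8)]; [:: (0, 14)]; [:: (0, 15); (2, 22)]; [:: (0, 16)]; [:: (0, 17); (2, 23)]; [:: (0, 18)]; [:: (0, 19)]; [:: (0, 20); (2, 25)]; [:: (0, 21)]; [:: (0, 22)]; [:: (0, 23)]; [:: (0, 24)]; [:: (0, 25)]; [:: (0, 26); (2, 40)]; [:: (0, 27)]; [:: (0, 28)]; [:: (0, 29)]; [:: (0, 30)]; [:: (0, 31)]; [:: (0, 32)]; [:: (0, 33)]; [:: (0, 34)]; [:: (0, 35)]; [:: (0, 36); (2, 46)]; [:: (0, 37); (2, 49)]; [:: (0, 38)]; [:: (0, 39)]; [:: (0, 40)]; [:: (0, 41)]; [:: (0, 42)]; [:: (0, 43); (2, 32)]; [:: (0, 44); (2, 21)]; [:: (0, 45)]; [:: (0, 46)]; [:: (0, 47); (2, 21)]; [:: (0, 48)]; [:: (0, 49)]; [:: (0, 50); (2, 21)]; [:: (0, 51); (2, 30)]; [:: (0, 52); (2, 31)]];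
      [:: [:: (0, 0)]; [:: (0, 1); (2, 22)]; [:: (0, 2)]; [:: (0, 3); (2, 21)]; [:: (0, 4); (2, 19)]; [:: (0, 5)]; [:: (0, 6)]; [:: (0, 7); (2, 16)]; [:: (0, 8)]; [:: (0, 9); (2, 15)]; [:: (0, 10); (2, 0); (2, 44); (2, 50); (4, 22)]; [:: (0, 11)]; [:: (0, 12); (2, 5)]; [:: (0, 13); (2, 6)]; [:: (0, 14)]; [:: (0, 15)]; [:: (0, 16)]; [:: (0, 17); (2, 24)]; [:: (0, 18); (2, 25)]; [:: (0, 19)]; [:: (0, 20)]; [:: (0, 21)]; [:: (0, 22)]; [:: (0, 23)]; [:: (0, 24)]; [:: (0, 25)]; [:: (0, 26)]; [:: (0, 27)]; [:: (0, 28)]; [:: (0, 29)]; [:: (0, 30)]; [:: (0, 31)]; [:: (0, 32)]; [:: (0, 33); (2, 30)]; [:: (0, 34)]; [:: (0, 35)]; [:: (0, 36); (2, 27)]; [:: (0, 37)]; [:: (0, 38)]; [:: (0, 39)]; [:: (0, 40)]; [:: (0, 41); (2, 49)]; [:: (0, 42)]; [:: (0, 43); (2, 48)]; [:: (0, 44); (2, 22)]; [:: (0, 45); (2, 40)]; [:: (0, 46)]; [:: (0, 47); (2, 22)]; [:: (0, 48)]; [:: (0, 49)]; [:: (0, 50); (2, 22)]; [:: (0, 51)]; [:: (0, 52); (2, 38)]];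
      [:: [:: (0, 0)]; [:: (0, 1); (2, 23)]; [:: (0, 2)]; [:: (0, 3)]; [:: (0, 4)]; [:: (0, 5); (2, 21)]; [:: (0, 6); (2, 19)]; [:: (0, 7); (2, 18)]; [:: (0, 8)]; [:: (0, 9); (2, 17)]; [:: (0, 10)]; [:: (0, 11); (2, 0); (2, 47); (2, 50); (4, 23)]; [:: (0, 12); (2, 3)]; [:: (0, 13); (2, 4)]; [:: (0, 14)]; [:: (0, 15); (2, 24)]; [:: (0, 16); (2, 25)]; [:: (0, 17)]; [:: (0, 18)]; [:: (0, 19)]; [:: (0, 20)]; [:: (0, 21)]; [:: (0, 22)]; [:: (0, 23)]; [:: (0, 24)]; [:: (0, 25)]; [:: (0, 26)]; [:: (0, 27)]; [:: (0, 28)]; [:: (0, 29)]; [:: (0, 30)]; [:: (0, 31)]; [:: (0, 32)]; [:: (0, 33)]; [:: (0, 34)]; [:: (0, 35); (2, 31)]; [:: (0, 36)]; [:: (0, 37); (2, 29)]; [:: (0, 38)]; [:: (0, 39)]; [:: (0, 40)]; [:: (0, 41)]; [:: (0, 42); (2, 46)]; [:: (0, 43); (2, 45)]; [:: (0, 44); (2, 23)]; [:: (0, 45)]; [:: (0, 46)]; [:: (0, 47); (2, 23)]; [:: (0, 48); (2, 40)]; [:: (0, 49)]; [:: (0, 50); (2, 23)]; [:: (0, 51); (2, 39)]; [:: (0, 52)]];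
      [:: [:: (0, 0); (2, 24)]; [:: (0, 1); (2, 24)]; [:: (0, 2)]; [:: (0, 3); (2, 23)]; [:: (0, 4)]; [:: (0, 5); (2, 22)]; [:: (0, 6)]; [:: (0, 7); (2, 20)]; [:: (0, 8); (2, 19)]; [:: (0, 9)]; [:: (0, 10); (2, 17)]; [:: (0, 11); (2, 15)]; [:: (0, 12); (2, 0); (2, 44); (2, 47); (2, 50); (4, 24)]; [:: (0, 13); (2, 2)]; [:: (0, 14); (2, 25)]; [:: (0, 15)]; [:: (0, 16)]; [:: (0, 17)]; [:: (0, 18)]; [:: (0, 19)]; [:: (0, 20)]; [:: (0, 21)]; [:: (0, 22)]; [:: (0, 23)]; [:: (0, 24)]; [:: (0, 25)]; [:: (0, 26)]; [:: (0, 27)]; [:: (0, 28)]; [:: (0, 29)]; [:: (0, 30)]; [:: (0, 31)]; [:: (0, 32); (2, 40)]; [:: (0, 33); (2, 39)]; [:: (0, 34)]; [:: (0, 35); (2, 38)]; [:: (0, 36)]; [:: (0, 37)]; [:: (0, 38)]; [:: (0, 39)]; [:: (0, 40)]; [:: (0, 41); (2, 29)]; [:: (0, 42); (2, 27)]; [:: (0, 43); (2, 26)]; [:: (0, 44); (2, 24)]; [:: (0, 45)]; [:: (0, 46)]; [:: (0, 47); (2, 24)]; [:: (0, 48)]; [:: (0, 49)]; [:: (0, 50); (2, 24)]; [:: (0, 51)]; [:: (0, 52)]];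
      [:: [:: (0, 0); (2, 25)]; [:: (0, 1)]; [:: (0, 2); (2, 24)]; [:: (0, 3)]; [:: (0, 4); (2, 23)]; [:: (0, 5)]; [:: (0, 6); (2, 22)]; [:: (0, 7)]; [:: (0, 8); (2, 21)]; [:: (0, 9); (2, 20)]; [:: (0, 10); (2, 18)]; [:: (0, 11); (2, 16)]; [:: (0, 12); (2, 14)]; [:: (0, 13); (2, 44); (2, 47); (2, 50); (4, 25)]; [:: (0, 14)]; [:: (0, 15)]; [:: (0, 16)]; [:: (0, 17)]; [:: (0, 18)]; [:: (0, 19)]; [:: (0, 20)]; [:: (0, 21)]; [:: (0, 22)]; [:: (0, 23)]; [:: (0, 24)]; [:: (0, 25)]; [:: (0, 26)]; [:: (0, 27)]; [:: (0, 28)]; [:: (0, 29)]; [:: (0, 30)]; [:: (0, 31)]; [:: (0, 32)]; [:: (0, 33)]; [:: (0, 34); (2, 40)]; [:: (0, 35)]; [:: (0, 36); (2, 39)]; [:: (0, 37); (2, 38)]; [:: (0, 38)]; [:: (0, 39)]; [:: (0, 40)]; [:: (0, 41); (2, 31)]; [:: (0, 42); (2, 30)]; [:: (0, 43); (2, 28)]; [:: (0, 44)]; [:: (0, 45)]; [:: (0, 46)]; [:: (0, 47)]; [:: (0, 48)]; [:: (0, 49)]; [:: (0, 50)]; [:: (0, 51)]; [:: (0, 52)]];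
      [:: [:: (0, 0)]; [:: (0, 1); (2, 2)]; [:: (0, 2)]; [:: (0, 3); (2, 4)]; [:: (0, 4)]; [:: (0, 5); (2, 6)]; [:: (0, 6)]; [:: (0, 7); (2, 9)]; [:: (0, 8)]; [:: (0, 9)]; [:: (0, 10)]; [:: (0, 11)]; [:: (0, 12); (2, 13)]; [:: (0, 13)]; [:: (0, 14); (2, 0); (4, 2)]; [:: (0, 15)]; [:: (0, 16); (2, 15)]; [:: (0, 17)]; [:: (0, 18); (2, 17)]; [:: (0, 19)]; [:: (0, 20)]; [:: (0, 21); (2, 19)]; [:: (0, 22)]; [:: (0, 23)]; [:: (0, 24)]; [:: (0, 25); (2, 24)]; [:: (0, 26)]; [:: (0, 27)]; [:: (0, 28); (2, 26)]; [:: (0, 29)]; [:: (0, 30); (2, 27)]; [:: (0, 31); (2, 29)]; [:: (0, 32); (2, 34)]; [:: (0, 33); (2, 36)]; [:: (0, 34)]; [:: (0, 35); (2, 37)]; [:: (0, 36)]; [:: (0, 37)]; [:: (0, 38)]; [:: (0, 39)]; [:: (0, 40)]; [:: (0, 41)]; [:: (0, 42)]; [:: (0, 43)]; [:: (0, 44); (2, 2)]; [:: (0, 45)]; [:: (0, 46)]; [:: (0, 47); (2, 2)]; [:: (0, 48)]; [:: (0, 49)]; [:: (0, 50); (2, 2)]; [:: (0, 51)]; [:: (0, 52)]];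
      [:: [:: (0, 0); (2, 3)]; [:: (0, 1)]; [:: (0, 2); (2, 4)]; [:: (0, 3)]; [:: (0, 4)]; [:: (0, 5)]; [:: (0, 6); (2, 8)]; [:: (0, 7)]; [:: (0, 8)]; [:: (0, 9); (2, 10)]; [:: (0, 10)]; [:: (0, 11); (2, 12)]; [:: (0, 12)]; [:: (0, 13)]; [:: (0, 14)]; [:: (0, 15); (2, 44); (4, 3)]; [:: (0, 16); (2, 14)]; [:: (0, 17)]; [:: (0, 18)]; [:: (0, 19)]; [:: (0, 20); (2, 18)]; [:: (0, 21)]; [:: (0, 22); (2, 21)]; [:: (0, 23)]; [:: (0, 24); (2, 23)]; [:: (0, 25)]; [:: (0, 26); (2, 45)]; [:: (0, 27); (2, 46)]; [:: (0, 28)]; [:: (0, 29)]; [:: (0, 30)]; [:: (0, 31)]; [:: (0, 32)]; [:: (0, 33)]; [:: (0, 34)]; [:: (0, 35)]; [:: (0, 36)]; [:: (0, 37); (2, 41)]; [:: (0, 38); (2, 31)]; [:: (0, 39)]; [:: (0, 40)]; [:: (0, 41)]; [:: (0, 42)]; [:: (0, 43)]; [:: (0, 44)]; [:: (0, 45)]; [:: (0, 46)]; [:: (0, 47)]; [:: (0, 48); (2, 32)]; [:: (0, 49)]; [:: (0, 50)]; [:: (0, 51); (2, 33)]; [:: (0, 52)]];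
      [:: [:: (0, 0); (2, 4)]; [:: (0, 1); (2, 4)]; [:: (0, 2)]; [:: (0, 3)]; [:: (0, 4)]; [:: (0, 5); (2, 8)]; [:: (0, 6)]; [:: (0, 7); (2, 10)]; [:: (0, 8)]; [:: (0, 9)]; [:: (0, 10)]; [:: (0, 11); (2, 13)]; [:: (0, 12)]; [:: (0, 13)]; [:: (0, 14); (2, 3)]; [:: (0, 15); (2, 2)]; [:: (0, 16); (2, 0); (2, 44); (4, 4)]; [:: (0, 17)]; [:: (0, 18)]; [:: (0, 19)]; [:: (0, 20); (2, 17)]; [:: (0, 21)]; [:: (0, 22); (2, 19)]; [:: (0, 23)]; [:: (0, 24)]; [:: (0, 25); (2, 23)]; [:: (0, 26)]; [:: (0, 27)]; [:: (0, 28); (2, 45)]; [:: (0, 29)]; [:: (0, 30); (2, 46)]; [:: (0, 31)]; [:: (0, 32)]; [:: (0, 33)]; [:: (0, 34)]; [:: (0, 35); (2, 41)]; [:: (0, 36)]; [:: (0, 37)]; [:: (0, 38); (2, 29)]; [:: (0, 39)]; [:: (0, 40)]; [:: (0, 41)]; [:: (0, 42)]; [:: (0, 43)]; [:: (0, 44); (2, 4)]; [:: (0, 45)]; [:: (0, 46)]; [:: (0, 47); (2, 4)]; [:: (0, 48); (2, 34)]; [:: (0, 49)]; [:: (0, 50); (2, 4)]; [:: (0, 51); (2, 36)]; [:: (0, 52)]];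
      [:: [:: (0, 0); (2, 5)]; [:: (0, 1)]; [:: (0, 2); (2, 6)]; [:: (0, 3)]; [:: (0, 4); (2, 8)]; [:: (0, 5)]; [:: (0, 6)]; [:: (0, 7)]; [:: (0, 8)]; [:: (0, 9); (2, 11)]; [:: (0, 10); (2, 12)]; [:: (0, 11)]; [:: (0, 12)]; [:: (0, 13)]; [:: (0, 14)]; [:: (0, 15)]; [:: (0, 16)]; [:: (0, 17); (2, 47); (4, 5)]; [:: (0, 18); (2, 14)]; [:: (0, 19)]; [:: (0, 20); (2, 16)]; [:: (0, 21)]; [:: (0, 22)]; [:: (0, 23); (2, 21)]; [:: (0, 24); (2, 22)]; [:: (0, 25)]; [:: (0, 26); (2, 48)]; [:: (0, 27)]; [:: (0, 28)]; [:: (0, 29); (2, 49)]; [:: (0, 30)]; [:: (0, 31)]; [:: (0, 32)]; [:: (0, 33)]; [:: (0, 34)]; [:: (0, 35)]; [:: (0, 36); (2, 42)]; [:: (0, 37)]; [:: (0, 38)]; [:: (0, 39); (2, 30)]; [:: (0, 40)]; [:: (0, 41)]; [:: (0, 42)]; [:: (0, 43)]; [:: (0, 44)]; [:: (0, 45); (2, 32)]; [:: (0, 46)]; [:: (0, 47)]; [:: (0, 48)]; [:: (0, 49)]; [:: (0, 50)]; [:: (0, 51)]; [:: (0, 52); (2, 35)]];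
      [:: [:: (0, 0); (2, 6)]; [:: (0, 1); (2, 6)]; [:: (0, 2)]; [:: (0, 3); (2, 8)]; [:: (0, 4)]; [:: (0, 5)]; [:: (0, 6)]; [:: (0, 7); (2, 11)]; [:: (0, 8)]; [:: (0, 9)]; [:: (0, 10); (2, 13)]; [:: (0, 11)]; [:: (0, 12)]; [:: (0, 13)]; [:: (0, 14); (2, 5)]; [:: (0, 15)]; [:: (0, 16)]; [:: (0, 17); (2, 2)]; [:: (0, 18); (2, 0); (2, 47); (4, 6)]; [:: (0, 19)]; [:: (0, 20); (2, 15)]; [:: (0, 21)]; [:: (0, 22)]; [:: (0, 23); (2, 19)]; [:: (0, 24)]; [:: (0, 25); (2, 22)]; [:: (0, 26)]; [:: (0, 27)]; [:: (0, 28); (2, 48)]; [:: (0, 29)]; [:: (0, 30)]; [:: (0, 31); (2, 49)]; [:: (0, 32)]; [:: (0, 33); (2, 42)]; [:: (0, 34)]; [:: (0, 35)]; [:: (0, 36)]; [:: (0, 37)]; [:: (0, 38)]; [:: (0, 39); (2, 27)]; [:: (0, 40)]; [:: (0, 41)]; [:: (0, 42)]; [:: (0, 43)]; [:: (0, 44); (2, 6)]; [:: (0, 45); (2, 34)]; [:: (0, 46)]; [:: (0, 47); (2, 6)]; [:: (0, 48)]; [:: (0, 49)]; [:: (0, 50); (2, 6)]; [:: (0, 51)]; [:: (0, 52); (2, 37)]];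
      [:: [:: (0, 0); (2, 7)]; [:: (0, 1)]; [:: (0, 2); (2, 9)]; [:: (0, 3)]; [:: (0, 4); (2, 10)]; [:: (0, 5)]; [:: (0, 6); (2, 11)]; [:: (0, 7)]; [:: (0, 8); (2, 12)]; [:: (0, 9)]; [:: (0, 10)]; [:: (0, 11)]; [:: (0, 12)]; [:: (0, 13)]; [:: (0, 14)]; [:: (0, 15)]; [:: (0, 16)]; [:: (0, 17)]; [:: (0, 18)]; [:: (0, 19); (2, 50); (4, 7)]; [:: (0, 20)]; [:: (0, 21); (2, 14)]; [:: (0, 22); (2, 16)]; [:: (0, 23); (2, 18)]; [:: (0, 24); (2, 20)]; [:: (0, 25)]; [:: (0, 26)]; [:: (0, 27); (2, 51)]; [:: (0, 28)]; [:: (0, 29); (2, 52)]; [:: (0, 30)]; [:: (0, 31)]; [:: (0, 32)]; [:: (0, 33)]; [:: (0, 34); (2, 43)]; [:: (0, 35)]; [:: (0, 36)]; [:: (0, 37)]; [:: (0, 38)]; [:: (0, 39)]; [:: (0, 40); (2, 28)]; [:: (0, 41)]; [:: (0, 42)]; [:: (0, 43)]; [:: (0, 44)]; [:: (0, 45)]; [:: (0, 46); (2, 33)]; [:: (0, 47)]; [:: (0, 48)]; [:: (0, 49); (2, 35)]; [:: (0, 50)]; [:: (0, 51)]; [:: (0, 52)]];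
      [:: [:: (0, 0)]; [:: (0, 1); (2, 8)]; [:: (0, 2)]; [:: (0, 3)]; [:: (0, 4)]; [:: (0, 5)]; [:: (0, 6)]; [:: (0, 7); (2, 12)]; [:: (0, 8)]; [:: (0, 9); (2, 13)]; [:: (0, 10)]; [:: (0, 11)]; [:: (0, 12)]; [:: (0, 13)]; [:: (0, 14)]; [:: (0, 15); (2, 6)]; [:: (0, 16); (2, 5)]; [:: (0, 17); (2, 4)]; [:: (0, 18); (2, 3)]; [:: (0, 19)]; [:: (0, 20); (2, 0); (2, 44); (2, 47); (4, 8)]; [:: (0, 21)]; [:: (0, 22)]; [:: (0, 23)]; [:: (0, 24); (2, 19)]; [:: (0, 25); (2, 21)]; [:: (0, 26); (2, 34)]; [:: (0, 27)]; [:: (0, 28); (2, 32)]; [:: (0, 29)]; [:: (0, 30)]; [:: (0, 31)]; [:: (0, 32)]; [:: (0, 33)]; [:: (0, 34)]; [:: (0, 35)]; [:: (0, 36)]; [:: (0, 37)]; [:: (0, 38); (2, 49)]; [:: (0, 39); (2, 46)]; [:: (0, 40)]; [:: (0, 41)]; [:: (0, 42)]; [:: (0, 43)]; [:: (0, 44); (2, 8)]; [:: (0, 45)]; [:: (0, 46)]; [:: (0, 47); (2, 8)]; [:: (0, 48)]; [:: (0, 49)]; [:: (0, 50); (2, 8)]; [:: (0, 51); (2, 42)]; [:: (0, 52); (2, 41)]];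
      [:: [:: (0, 0); (2, 9)]; [:: (0, 1); (2, 9)]; [:: (0, 2)]; [:: (0, 3); (2, 10)]; [:: (0, 4)]; [:: (0, 5); (2, 11)]; [:: (0, 6)]; [:: (0, 7)]; [:: (0, 8); (2, 13)]; [:: (0, 9)]; [:: (0, 10)]; [:: (0, 11)]; [:: (0, 12)]; [:: (0, 13)]; [:: (0, 14); (2, 7)]; [:: (0, 15)]; [:: (0, 16)]; [:: (0, 17)]; [:: (0, 18)]; [:: (0, 19); (2, 2)]; [:: (0, 20)]; [:: (0, 21); (2, 0); (2, 50); (4, 9)]; [:: (0, 22); (2, 15)]; [:: (0, 23); (2, 17)]; [:: (0, 24)]; [:: (0, 25); (2, 20)]; [:: (0, 26)]; [:: (0, 27)]; [:: (0, 28)]; [:: (0, 29)]; [:: (0, 30); (2, 51)]; [:: (0, 31); (2, 52)]; [:: (0, 32); (2, 43)]; [:: (0, 33)]; [:: (0, 34)]; [:: (0, 35)]; [:: (0, 36)]; [:: (0, 37)]; [:: (0, 38)]; [:: (0, 39)]; [:: (0, 40); (2, 26)]; [:: (0, 41)]; [:: (0, 42)]; [:: (0, 43)]; [:: (0, 44); (2, 9)]; [:: (0, 45)]; [:: (0, 46); (2, 36)]; [:: (0, 47); (2, 9)]; [:: (0, 48)]; [:: (0, 49); (2, 37)]; [:: (0, 50); (2, 9)]; [:: (0, 51)]; [:: (0, 52)]];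
      [:: [:: (0, 0)]; [:: (0, 1); (2, 10)]; [:: (0, 2)]; [:: (0, 3)]; [:: (0, 4)]; [:: (0, 5); (2, 12)]; [:: (0, 6); (2, 13)]; [:: (0, 7)]; [:: (0, 8)]; [:: (0, 9)]; [:: (0, 10)]; [:: (0, 11)]; [:: (0, 12)]; [:: (0, 13)]; [:: (0, 14)]; [:: (0, 15); (2, 9)]; [:: (0, 16); (2, 7)]; [:: (0, 17)]; [:: (0, 18)]; [:: (0, 19); (2, 4)]; [:: (0, 20)]; [:: (0, 21); (2, 3)]; [:: (0, 22); (2, 0); (2, 44); (2, 50); (4, 10)]; [:: (0, 23)]; [:: (0, 24); (2, 17)]; [:: (0, 25); (2, 18)]; [:: (0, 26)]; [:: (0, 27); (2, 36)]; [:: (0, 28)]; [:: (0, 29)]; [:: (0, 30); (2, 33)]; [:: (0, 31)]; [:: (0, 32)]; [:: (0, 33)]; [:: (0, 34)]; [:: (0, 35)]; [:: (0, 36)]; [:: (0, 37)]; [:: (0, 38); (2, 52)]; [:: (0, 39)]; [:: (0, 40); (2, 45)]; [:: (0, 41)]; [:: (0, 42)]; [:: (0, 43)]; [:: (0, 44); (2, 10)]; [:: (0, 45)]; [:: (0, 46)]; [:: (0, 47); (2, 10)]; [:: (0, 48); (2, 43)]; [:: (0, 49); (2, 41)]; [:: (0, 50); (2, 10)]; [:: (0, 51)]; [:: (0, 52)]];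
      [:: [:: (0, 0)]; [:: (0, 1); (2, 11)]; [:: (0, 2)]; [:: (0, 3); (2, 12)]; [:: (0, 4); (2, 13)]; [:: (0, 5)]; [:: (0, 6)]; [:: (0, 7)]; [:: (0, 8)]; [:: (0, 9)]; [:: (0, 10)]; [:: (0, 11)]; [:: (0, 12)]; [:: (0, 13)]; [:: (0, 14)]; [:: (0, 15)]; [:: (0, 16)]; [:: (0, 17); (2, 9)]; [:: (0, 18); (2, 7)]; [:: (0, 19); (2, 6)]; [:: (0, 20)]; [:: (0, 21); (2, 5)]; [:: (0, 22)]; [:: (0, 23); (2, 0); (2, 47); (2, 50); (4, 11)]; [:: (0, 24); (2, 15)]; [:: (0, 25); (2, 16)]; [:: (0, 26)]; [:: (0, 27)]; [:: (0, 28)]; [:: (0, 29); (2, 37)]; [:: (0, 30)]; [:: (0, 31); (2, 35)]; [:: (0, 32)]; [:: (0, 33)]; [:: (0, 34)]; [:: (0, 35)]; [:: (0, 36)]; [:: (0, 37)]; [:: (0, 38)]; [:: (0, 39); (2, 51)]; [:: (0, 40); (2, 48)]; [:: (0, 41)]; [:: (0, 42)]; [:: (0, 43)]; [:: (0, 44); (2, 11)]; [:: (0, 45); (2, 43)]; [:: (0, 46); (2, 42)]; [:: (0, 47); (2, 11)]; [:: (0, 48)]; [:: (0, 49)]; [:: (0, 50); (2, 11)]; [:: (0, 51)]; [:: (0, 52)]];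
      [:: [:: (0, 0); (2, 12)]; [:: (0, 1); (2, 12)]; [:: (0, 2); (2, 13)]; [:: (0, 3)]; [:: (0, 4)]; [:: (0, 5)]; [:: (0, 6)]; [:: (0, 7)]; [:: (0, 8)]; [:: (0, 9)]; [:: (0, 10)]; [:: (0, 11)]; [:: (0, 12)]; [:: (0, 13)]; [:: (0, 14)]; [:: (0, 15); (2, 11)]; [:: (0, 16)]; [:: (0, 17); (2, 10)]; [:: (0, 18)]; [:: (0, 19); (2, 8)]; [:: (0, 20); (2, 7)]; [:: (0, 21)]; [:: (0, 22); (2, 5)]; [:: (0, 23); (2, 3)]; [:: (0, 24); (2, 0); (2, 44); (2, 47); (2, 50); (4, 12)]; [:: (0, 25); (2, 14)]; [:: (0, 26); (2, 43)]; [:: (0, 27); (2, 42)]; [:: (0, 28)]; [:: (0, 29); (2, 41)]; [:: (0, 30)]; [:: (0, 31)]; [:: (0, 32)]; [:: (0, 33)]; [:: (0, 34)]; [:: (0, 35)]; [:: (0, 36)]; [:: (0, 37)]; [:: (0, 38); (2, 35)]; [:: (0, 39); (2, 33)]; [:: (0, 40); (2, 32)]; [:: (0, 41)]; [:: (0, 42)]; [:: (0, 43)]; [:: (0, 44); (2, 12)]; [:: (0, 45)]; [:: (0, 46)]; [:: (0, 47); (2, 12)]; [:: (0, 48)]; [:: (0, 49)]; [:: (0, 50); (2, 12)]; [:: (0, 51)]; [:: (0, 52)]];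
      [:: [:: (0, 0); (2, 13)]; [:: (0, 1)]; [:: (0, 2)]; [:: (0, 3)]; [:: (0, 4)]; [:: (0, 5)]; [:: (0, 6)]; [:: (0, 7)]; [:: (0, 8)]; [:: (0, 9)]; [:: (0, 10)]; [:: (0, 11)]; [:: (0, 12)]; [:: (0, 13)]; [:: (0, 14); (2, 12)]; [:: (0, 15)]; [:: (0, 16); (2, 11)]; [:: (0, 17)]; [:: (0, 18); (2, 10)]; [:: (0, 19)]; [:: (0, 20); (2, 9)]; [:: (0, 21); (2, 8)]; [:: (0, 22); (2, 6)]; [:: (0, 23); (2, 4)]; [:: (0, 24); (2, 2)]; [:: (0, 25); (2, 44); (2, 47); (2, 50); (4, 13)]; [:: (0, 26)]; [:: (0, 27)]; [:: (0, 28); (2, 43)]; [:: (0, 29)]; [:: (0, 30); (2, 42)]; [:: (0, 31); (2, 41)]; [:: (0, 32)]; [:: (0, 33)]; [:: (0, 34)]; [:: (0, 35)]; [:: (0, 36)]; [:: (0, 37)]; [:: (0, 38); (2, 37)]; [:: (0, 39); (2, 36)]; [:: (0, 40); (2, 34)]; [:: (0, 41)]; [:: (0, 42)]; [:: (0, 43)]; [:: (0, 44)]; [:: (0, 45)]; [:: (0, 46)]; [:: (0, 47)]; [:: (0, 48)]; [:: (0, 49)]; [:: (0, 50)]; [:: (0, 51)]; [:: (0, 52)]];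
      [:: [:: (0, 0)]; [:: (0, 1)]; [:: (0, 2)]; [:: (0, 3)]; [:: (0, 4)]; [:: (0, 5); (1, 32); (2, 3)]; [:: (0, 6); (1, 34); (2, 4)]; [:: (0, 7)]; [:: (0, 8)]; [:: (0, 9)]; [:: (0, 10)]; [:: (0, 11); (1, 43); (2, 10)]; [:: (0, 12)]; [:: (0, 13)]; [:: (0, 14)]; [:: (0, 15); (1, 26); (2, 17)]; [:: (0, 16); (1, 28); (2, 18)]; [:: (0, 17)]; [:: (0, 18)]; [:: (0, 19)]; [:: (0, 20)]; [:: (0, 21)]; [:: (0, 22); (1, 40); (2, 23)]; [:: (0, 23)]; [:: (0, 24)]; [:: (0, 25)]; [:: (0, 26)]; [:: (0, 27); (1, 29)]; [:: (0, 28)]; [:: (0, 29)]; [:: (0, 30); (1, 31)]; [:: (0, 31)]; [:: (0, 32)]; [:: (0, 33)]; [:: (0, 34)]; [:: (0, 35); (1, 33)]; [:: (0, 36)]; [:: (0, 37); (1, 36)]; [:: (0, 38); (1, 39)]; [:: (0, 39)]; [:: (0, 40)]; [:: (0, 41)]; [:: (0, 42); (1, 41)]; [:: (0, 43)]; [:: (0, 44); (1, 45)]; [:: (0, 45)]; [:: (0, 46)]; [:: (0, 47); (1, 45)]; [:: (0, 48); (1, 44); (1, 47); (2, 45)]; [:: (0, 49); (1, 46)]; [:: (0, 50)]; [:: (0, 51); (1, 52)]; [:: (0, 52)]];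
      [:: [:: (0, 0)]; [:: (0, 1)]; [:: (0, 2)]; [:: (0, 3)]; [:: (0, 4)]; [:: (0, 5)]; [:: (0, 6)]; [:: (0, 7); (1, 35); (2, 5)]; [:: (0, 8)]; [:: (0, 9); (1, 37); (2, 6)]; [:: (0, 10); (1, 41); (2, 8)]; [:: (0, 11)]; [:: (0, 12)]; [:: (0, 13)]; [:: (0, 14)]; [:: (0, 15)]; [:: (0, 16)]; [:: (0, 17); (1, 29); (2, 19)]; [:: (0, 18); (1, 31); (2, 21)]; [:: (0, 19)]; [:: (0, 20); (1, 38); (2, 22)]; [:: (0, 21)]; [:: (0, 22)]; [:: (0, 23)]; [:: (0, 24)]; [:: (0, 25)]; [:: (0, 26); (1, 27)]; [:: (0, 27)]; [:: (0, 28); (1, 30)]; [:: (0, 29)]; [:: (0, 30)]; [:: (0, 31)]; [:: (0, 32)]; [:: (0, 33); (1, 32)]; [:: (0, 34)]; [:: (0, 35)]; [:: (0, 36); (1, 34)]; [:: (0, 37)]; [:: (0, 38)]; [:: (0, 39); (1, 40)]; [:: (0, 40)]; [:: (0, 41)]; [:: (0, 42)]; [:: (0, 43); (1, 42)]; [:: (0, 44)]; [:: (0, 45); (1, 46)]; [:: (0, 46)]; [:: (0, 47); (1, 49)]; [:: (0, 48)]; [:: (0, 49)]; [:: (0, 50); (1, 49)]; [:: (0, 51); (1, 48)]; [:: (0, 52); (1, 47); (1, 50); (2, 49)]];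
      [:: [:: (0, 0)]; [:: (0, 1)]; [:: (0, 2)]; [:: (0, 3)]; [:: (0, 4)]; [:: (0, 5)]; [:: (0, 6)]; [:: (0, 7); (1, 33); (2, 3)]; [:: (0, 8)]; [:: (0, 9); (1, 36); (2, 4)]; [:: (0, 10)]; [:: (0, 11); (1, 42); (2, 8)]; [:: (0, 12)]; [:: (0, 13)]; [:: (0, 14)]; [:: (0, 15); (1, 27); (2, 19)]; [:: (0, 16); (1, 30); (2, 21)]; [:: (0, 17)]; [:: (0, 18)]; [:: (0, 19)]; [:: (0, 20); (1, 39); (2, 23)]; [:: (0, 21)]; [:: (0, 22)]; [:: (0, 23)]; [:: (0, 24)]; [:: (0, 25)]; [:: (0, 26); (1, 29)]; [:: (0, 27)]; [:: (0, 28); (1, 31)]; [:: (0, 29)]; [:: (0, 30)]; [:: (0, 31)]; [:: (0, 32)]; [:: (0, 33)]; [:: (0, 34)]; [:: (0, 35); (1, 32)]; [:: (0, 36)]; [:: (0, 37); (1, 34)]; [:: (0, 38); (1, 40)]; [:: (0, 39)]; [:: (0, 40)]; [:: (0, 41)]; [:: (0, 42)]; [:: (0, 43); (1, 41)]; [:: (0, 44); (1, 46)]; [:: (0, 45)]; [:: (0, 46)]; [:: (0, 47)]; [:: (0, 48); (1, 49)]; [:: (0, 49)]; [:: (0, 50); (1, 46)]; [:: (0, 51); (1, 44); (1, 50); (2, 46)]; [:: (0, 52); (1, 45)]];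
      [:: [:: (0, 0); (1, 26)]; [:: (0, 1)]; [:: (0, 2)]; [:: (0, 3); (1, 45); (2, 17)]; [:: (0, 4)]; [:: (0, 5); (1, 48); (2, 15)]; [:: (0, 6)]; [:: (0, 7)]; [:: (0, 8); (1, 34); (2, 2)]; [:: (0, 9)]; [:: (0, 10)]; [:: (0, 11)]; [:: (0, 12); (1, 43); (2, 9)]; [:: (0, 13)]; [:: (0, 14); (1, 28); (2, 20)]; [:: (0, 15)]; [:: (0, 16)]; [:: (0, 17)]; [:: (0, 18)]; [:: (0, 19)]; [:: (0, 20)]; [:: (0, 21); (1, 40); (2, 24)]; [:: (0, 22)]; [:: (0, 23)]; [:: (0, 24)]; [:: (0, 25)]; [:: (0, 26)]; [:: (0, 27)]; [:: (0, 28)]; [:: (0, 29)]; [:: (0, 30); (1, 38)]; [:: (0, 31); (1, 39)]; [:: (0, 32); (1, 44); (1, 47); (2, 26)]; [:: (0, 33); (1, 52)]; [:: (0, 34)]; [:: (0, 35); (1, 51)]; [:: (0, 36)]; [:: (0, 37)]; [:: (0, 38)]; [:: (0, 39)]; [:: (0, 40)]; [:: (0, 41); (1, 36)]; [:: (0, 42); (1, 37)]; [:: (0, 43)]; [:: (0, 44); (1, 26)]; [:: (0, 45)]; [:: (0, 46); (1, 29)]; [:: (0, 47); (1, 26)]; [:: (0, 48)]; [:: (0, 49); (1, 27)]; [:: (0, 50)]; [:: (0, 51)]; [:: (0, 52)]];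
      [:: [:: (0, 0); (1, 27)]; [:: (0, 1)]; [:: (0, 2)]; [:: (0, 3); (1, 46); (2, 19)]; [:: (0, 4)]; [:: (0, 5)]; [:: (0, 6)]; [:: (0, 7); (1, 51); (2, 15)]; [:: (0, 8)]; [:: (0, 9)]; [:: (0, 10); (1, 36); (2, 2)]; [:: (0, 11)]; [:: (0, 12); (1, 42); (2, 6)]; [:: (0, 13)]; [:: (0, 14); (1, 30); (2, 22)]; [:: (0, 15)]; [:: (0, 16)]; [:: (0, 17)]; [:: (0, 18); (1, 39); (2, 24)]; [:: (0, 19)]; [:: (0, 20)]; [:: (0, 21)]; [:: (0, 22)]; [:: (0, 23)]; [:: (0, 24)]; [:: (0, 25)]; [:: (0, 26)]; [:: (0, 27)]; [:: (0, 28); (1, 38)]; [:: (0, 29)]; [:: (0, 30)]; [:: (0, 31); (1, 40)]; [:: (0, 32); (1, 49)]; [:: (0, 33); (1, 44); (1, 50); (2, 27)]; [:: (0, 34)]; [:: (0, 35); (1, 48)]; [:: (0, 36)]; [:: (0, 37)]; [:: (0, 38)]; [:: (0, 39)]; [:: (0, 40)]; [:: (0, 41); (1, 34)]; [:: (0, 42)]; [:: (0, 43); (1, 37)]; [:: (0, 44); (1, 27)]; [:: (0, 45); (1, 29)]; [:: (0, 46)]; [:: (0, 47)]; [:: (0, 48)]; [:: (0, 49)]; [:: (0, 50); (1, 27)]; [:: (0, 51)]; [:: (0, 52); (1, 26)]];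
      [:: [:: (0, 0); (1, 28)]; [:: (0, 1); (1, 28)]; [:: (0, 2); (1, 26); (2, 20)]; [:: (0, 3)]; [:: (0, 4); (1, 45); (2, 18)]; [:: (0, 5)]; [:: (0, 6); (1, 48); (2, 16)]; [:: (0, 7)]; [:: (0, 8); (1, 32); (2, 14)]; [:: (0, 9)]; [:: (0, 10)]; [:: (0, 11)]; [:: (0, 12)]; [:: (0, 13); (1, 43); (2, 7)]; [:: (0, 14)]; [:: (0, 15)]; [:: (0, 16)]; [:: (0, 17)]; [:: (0, 18)]; [:: (0, 19); (1, 40); (2, 25)]; [:: (0, 20)]; [:: (0, 21)]; [:: (0, 22)]; [:: (0, 23)]; [:: (0, 24)]; [:: (0, 25)]; [:: (0, 26)]; [:: (0, 27); (1, 38)]; [:: (0, 28)]; [:: (0, 29); (1, 39)]; [:: (0, 30)]; [:: (0, 31)]; [:: (0, 32)]; [:: (0, 33)]; [:: (0, 34); (1, 44); (1, 47); (2, 28)]; [:: (0, 35)]; [:: (0, 36); (1, 52)]; [:: (0, 37); (1, 51)]; [:: (0, 38)]; [:: (0, 39)]; [:: (0, 40)]; [:: (0, 41); (1, 33)]; [:: (0, 42); (1, 35)]; [:: (0, 43)]; [:: (0, 44)]; [:: (0, 45)]; [:: (0, 46); (1, 31)]; [:: (0, 47)]; [:: (0, 48)]; [:: (0, 49); (1, 30)]; [:: (0, 50); (1, 28)]; [:: (0, 51)]; [:: (0, 52)]];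
      [:: [:: (0, 0); (1, 29)]; [:: (0, 1)]; [:: (0, 2)]; [:: (0, 3)]; [:: (0, 4)]; [:: (0, 5); (1, 49); (2, 19)]; [:: (0, 6)]; [:: (0, 7); (1, 52); (2, 17)]; [:: (0, 8)]; [:: (0, 9)]; [:: (0, 10)]; [:: (0, 11); (1, 37); (2, 2)]; [:: (0, 12); (1, 41); (2, 4)]; [:: (0, 13)]; [:: (0, 14); (1, 31); (2, 23)]; [:: (0, 15)]; [:: (0, 16); (1, 38); (2, 24)]; [:: (0, 17)]; [:: (0, 18)]; [:: (0, 19)]; [:: (0, 20)]; [:: (0, 21)]; [:: (0, 22)]; [:: (0, 23)]; [:: (0, 24)]; [:: (0, 25)]; [:: (0, 26)]; [:: (0, 27)]; [:: (0, 28); (1, 39)]; [:: (0, 29)]; [:: (0, 30); (1, 40)]; [:: (0, 31)]; [:: (0, 32); (1, 46)]; [:: (0, 33); (1, 45)]; [:: (0, 34)]; [:: (0, 35); (1, 47); (1, 50); (2, 29)]; [:: (0, 36)]; [:: (0, 37)]; [:: (0, 38)]; [:: (0, 39)]; [:: (0, 40)]; [:: (0, 41)]; [:: (0, 42); (1, 34)]; [:: (0, 43); (1, 36)]; [:: (0, 44)]; [:: (0, 45)]; [:: (0, 46)]; [:: (0, 47); (1, 29)]; [:: (0, 48); (1, 27)]; [:: (0, 49)]; [:: (0, 50); (1, 29)]; [:: (0, 51); (1, 26)]; [:: (0, 52)]];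
      [:: [:: (0, 0); (1, 30)]; [:: (0, 1); (1, 30)]; [:: (0, 2); (1, 27); (2, 22)]; [:: (0, 3)]; [:: (0, 4); (1, 46); (2, 21)]; [:: (0, 5)]; [:: (0, 6)]; [:: (0, 7)]; [:: (0, 8)]; [:: (0, 9); (1, 51); (2, 16)]; [:: (0, 10); (1, 33); (2, 14)]; [:: (0, 11)]; [:: (0, 12)]; [:: (0, 13); (1, 42); (2, 5)]; [:: (0, 14)]; [:: (0, 15)]; [:: (0, 16)]; [:: (0, 17); (1, 39); (2, 25)]; [:: (0, 18)]; [:: (0, 19)]; [:: (0, 20)]; [:: (0, 21)]; [:: (0, 22)]; [:: (0, 23)]; [:: (0, 24)]; [:: (0, 25)]; [:: (0, 26); (1, 38)]; [:: (0, 27)]; [:: (0, 28)]; [:: (0, 29); (1, 40)]; [:: (0, 30)]; [:: (0, 31)]; [:: (0, 32)]; [:: (0, 33)]; [:: (0, 34); (1, 49)]; [:: (0, 35)]; [:: (0, 36); (1, 44); (1, 50); (2, 30)]; [:: (0, 37); (1, 48)]; [:: (0, 38)]; [:: (0, 39)]; [:: (0, 40)]; [:: (0, 41); (1, 32)]; [:: (0, 42)]; [:: (0, 43); (1, 35)]; [:: (0, 44)]; [:: (0, 45); (1, 31)]; [:: (0, 46)]; [:: (0, 47); (1, 30)]; [:: (0, 48)]; [:: (0, 49)]; [:: (0, 50)]; [:: (0, 51)]; [:: (0, 52); (1, 28)]];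
      [:: [:: (0, 0); (1, 31)]; [:: (0, 1); (1, 31)]; [:: (0, 2); (1, 29); (2, 23)]; [:: (0, 3)]; [:: (0, 4)]; [:: (0, 5)]; [:: (0, 6); (1, 49); (2, 21)]; [:: (0, 7)]; [:: (0, 8)]; [:: (0, 9); (1, 52); (2, 18)]; [:: (0, 10)]; [:: (0, 11); (1, 35); (2, 14)]; [:: (0, 12)]; [:: (0, 13); (1, 41); (2, 3)]; [:: (0, 14)]; [:: (0, 15); (1, 38); (2, 25)]; [:: (0, 16)]; [:: (0, 17)]; [:: (0, 18)]; [:: (0, 19)]; [:: (0, 20)]; [:: (0, 21)]; [:: (0, 22)]; [:: (0, 23)]; [:: (0, 24)]; [:: (0, 25)]; [:: (0, 26); (1, 39)]; [:: (0, 27); (1, 40)]; [:: (0, 28)]; [:: (0, 29)]; [:: (0, 30)]; [:: (0, 31)]; [:: (0, 32)]; [:: (0, 33)]; [:: (0, 34); (1, 46)]; [:: (0, 35)]; [:: (0, 36); (1, 45)]; [:: (0, 37); (1, 47); (1, 50); (2, 31)]; [:: (0, 38)]; [:: (0, 39)]; [:: (0, 40)]; [:: (0, 41)]; [:: (0, 42); (1, 32)]; [:: (0, 43); (1, 33)]; [:: (0, 44); (1, 31)]; [:: (0, 45)]; [:: (0, 46)]; [:: (0, 47)]; [:: (0, 48); (1, 30)]; [:: (0, 49)]; [:: (0, 50)]; [:: (0, 51); (1, 28)]; [:: (0, 52)]];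
      [:: [:: (0, 0)]; [:: (0, 1); (1, 38)]; [:: (0, 2)]; [:: (0, 3); (1, 31); (2, 25)]; [:: (0, 4); (1, 29); (2, 24)]; [:: (0, 5)]; [:: (0, 6)]; [:: (0, 7)]; [:: (0, 8); (1, 49); (2, 22)]; [:: (0, 9)]; [:: (0, 10); (1, 52); (2, 20)]; [:: (0, 11)]; [:: (0, 12); (1, 35); (2, 16)]; [:: (0, 13); (1, 37); (2, 15)]; [:: (0, 14)]; [:: (0, 15)]; [:: (0, 16)]; [:: (0, 17)]; [:: (0, 18)]; [:: (0, 19)]; [:: (0, 20)]; [:: (0, 21)]; [:: (0, 22)]; [:: (0, 23)]; [:: (0, 24)]; [:: (0, 25)]; [:: (0, 26)]; [:: (0, 27)]; [:: (0, 28)]; [:: (0, 29)]; [:: (0, 30)]; [:: (0, 31)]; [:: (0, 32); (1, 30)]; [:: (0, 33); (1, 28)]; [:: (0, 34); (1, 27)]; [:: (0, 35)]; [:: (0, 36); (1, 26)]; [:: (0, 37)]; [:: (0, 38)]; [:: (0, 39)]; [:: (0, 40)]; [:: (0, 41); (1, 47); (1, 50); (2, 38)]; [:: (0, 42); (1, 48)]; [:: (0, 43); (1, 51)]; [:: (0, 44); (1, 38)]; [:: (0, 45); (1, 39)]; [:: (0, 46); (1, 40)]; [:: (0, 47)]; [:: (0, 48)]; [:: (0, 49)]; [:: (0, 50)]; [:: (0, 51)]; [:: (0, 52)]];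
      [:: [:: (0, 0)]; [:: (0, 1); (1, 39)]; [:: (0, 2)]; [:: (0, 3)]; [:: (0, 4)]; [:: (0, 5); (1, 30); (2, 25)]; [:: (0, 6); (1, 27); (2, 24)]; [:: (0, 7)]; [:: (0, 8); (1, 46); (2, 23)]; [:: (0, 9)]; [:: (0, 10)]; [:: (0, 11); (1, 51); (2, 20)]; [:: (0, 12); (1, 33); (2, 18)]; [:: (0, 13); (1, 36); (2, 17)]; [:: (0, 14)]; [:: (0, 15)]; [:: (0, 16)]; [:: (0, 17)]; [:: (0, 18)]; [:: (0, 19)]; [:: (0, 20)]; [:: (0, 21)]; [:: (0, 22)]; [:: (0, 23)]; [:: (0, 24)]; [:: (0, 25)]; [:: (0, 26)]; [:: (0, 27)]; [:: (0, 28)]; [:: (0, 29)]; [:: (0, 30)]; [:: (0, 31)]; [:: (0, 32); (1, 31)]; [:: (0, 33)]; [:: (0, 34); (1, 29)]; [:: (0, 35); (1, 28)]; [:: (0, 36)]; [:: (0, 37); (1, 26)]; [:: (0, 38)]; [:: (0, 39)]; [:: (0, 40)]; [:: (0, 41); (1, 45)]; [:: (0, 42); (1, 44); (1, 50); (2, 39)]; [:: (0, 43); (1, 52)]; [:: (0, 44)]; [:: (0, 45)]; [:: (0, 46)]; [:: (0, 47); (1, 39)]; [:: (0, 48); (1, 38)]; [:: (0, 49); (1, 40)]; [:: (0, 50)]; [:: (0, 51)]; [:: (0, 52)]];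
      [:: [:: (0, 0)]; [:: (0, 1); (1, 40)]; [:: (0, 2)]; [:: (0, 3)]; [:: (0, 4)]; [:: (0, 5)]; [:: (0, 6)]; [:: (0, 7); (1, 28); (2, 25)]; [:: (0, 8)]; [:: (0, 9); (1, 26); (2, 24)]; [:: (0, 10); (1, 45); (2, 23)]; [:: (0, 11); (1, 48); (2, 22)]; [:: (0, 12); (1, 32); (2, 21)]; [:: (0, 13); (1, 34); (2, 19)]; [:: (0, 14)]; [:: (0, 15)]; [:: (0, 16)]; [:: (0, 17)]; [:: (0, 18)]; [:: (0, 19)]; [:: (0, 20)]; [:: (0, 21)]; [:: (0, 22)]; [:: (0, 23)]; [:: (0, 24)]; [:: (0, 25)]; [:: (0, 26)]; [:: (0, 27)]; [:: (0, 28)]; [:: (0, 29)]; [:: (0, 30)]; [:: (0, 31)]; [:: (0, 32)]; [:: (0, 33); (1, 31)]; [:: (0, 34)]; [:: (0, 35); (1, 30)]; [:: (0, 36); (1, 29)]; [:: (0, 37); (1, 27)]; [:: (0, 38)]; [:: (0, 39)]; [:: (0, 40)]; [:: (0, 41); (1, 46)]; [:: (0, 42); (1, 49)]; [:: (0, 43); (1, 44); (1, 47); (2, 40)]; [:: (0, 44)]; [:: (0, 45)]; [:: (0, 46)]; [:: (0, 47)]; [:: (0, 48)]; [:: (0, 49)]; [:: (0, 50); (1, 40)]; [:: (0, 51); (1, 38)]; [:: (0, 52); (1, 39)]];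
      [:: [:: (0, 0)]; [:: (0, 1)]; [:: (0, 2)]; [:: (0, 3); (1, 32); (2, 5)]; [:: (0, 4); (1, 34); (2, 6)]; [:: (0, 5)]; [:: (0, 6)]; [:: (0, 7)]; [:: (0, 8)]; [:: (0, 9)]; [:: (0, 10); (1, 43); (2, 11)]; [:: (0, 11)]; [:: (0, 12)]; [:: (0, 13)]; [:: (0, 14)]; [:: (0, 15)]; [:: (0, 16)]; [:: (0, 17); (1, 26); (2, 15)]; [:: (0, 18); (1, 28); (2, 16)]; [:: (0, 19)]; [:: (0, 20)]; [:: (0, 21)]; [:: (0, 22)]; [:: (0, 23); (1, 40); (2, 22)]; [:: (0, 24)]; [:: (0, 25)]; [:: (0, 26)]; [:: (0, 27)]; [:: (0, 28)]; [:: (0, 29); (1, 27)]; [:: (0, 30)]; [:: (0, 31); (1, 30)]; [:: (0, 32)]; [:: (0, 33); (1, 35)]; [:: (0, 34)]; [:: (0, 35)]; [:: (0, 36); (1, 37)]; [:: (0, 37)]; [:: (0, 38)]; [:: (0, 39); (1, 38)]; [:: (0, 40)]; [:: (0, 41); (1, 42)]; [:: (0, 42)]; [:: (0, 43)]; [:: (0, 44); (1, 48)]; [:: (0, 45); (1, 44); (1, 47); (2, 48)]; [:: (0, 46); (1, 49)]; [:: (0, 47); (1, 48)]; [:: (0, 48)]; [:: (0, 49)]; [:: (0, 50)]; [:: (0, 51)]; [:: (0, 52); (1, 51)]];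
      [:: [:: (0, 0)]; [:: (0, 1)]; [:: (0, 2)]; [:: (0, 3)]; [:: (0, 4)]; [:: (0, 5); (1, 35); (2, 7)]; [:: (0, 6); (1, 37); (2, 9)]; [:: (0, 7)]; [:: (0, 8); (1, 41); (2, 10)]; [:: (0, 9)]; [:: (0, 10)]; [:: (0, 11)]; [:: (0, 12)]; [:: (0, 13)]; [:: (0, 14)]; [:: (0, 15)]; [:: (0, 16)]; [:: (0, 17)]; [:: (0, 18)]; [:: (0, 19); (1, 29); (2, 17)]; [:: (0, 20)]; [:: (0, 21); (1, 31); (2, 18)]; [:: (0, 22); (1, 38); (2, 20)]; [:: (0, 23)]; [:: (0, 24)]; [:: (0, 25)]; [:: (0, 26)]; [:: (0, 27); (1, 26)]; [:: (0, 28)]; [:: (0, 29)]; [:: (0, 30); (1, 28)]; [:: (0, 31)]; [:: (0, 32); (1, 33)]; [:: (0, 33)]; [:: (0, 34); (1, 36)]; [:: (0, 35)]; [:: (0, 36)]; [:: (0, 37)]; [:: (0, 38)]; [:: (0, 39)]; [:: (0, 40); (1, 39)]; [:: (0, 41)]; [:: (0, 42); (1, 43)]; [:: (0, 43)]; [:: (0, 44)]; [:: (0, 45)]; [:: (0, 46); (1, 45)]; [:: (0, 47); (1, 52)]; [:: (0, 48); (1, 51)]; [:: (0, 49); (1, 47); (1, 50); (2, 52)]; [:: (0, 50); (1, 52)]; [:: (0, 51)]; [:: (0, 52)]];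
      [:: [:: (0, 0)]; [:: (0, 1)]; [:: (0, 2)]; [:: (0, 3); (1, 33); (2, 7)]; [:: (0, 4); (1, 36); (2, 9)]; [:: (0, 5)]; [:: (0, 6)]; [:: (0, 7)]; [:: (0, 8); (1, 42); (2, 11)]; [:: (0, 9)]; [:: (0, 10)]; [:: (0, 11)]; [:: (0, 12)]; [:: (0, 13)]; [:: (0, 14)]; [:: (0, 15)]; [:: (0, 16)]; [:: (0, 17)]; [:: (0, 18)]; [:: (0, 19); (1, 27); (2, 15)]; [:: (0, 20)]; [:: (0, 21); (1, 30); (2, 16)]; [:: (0, 22)]; [:: (0, 23); (1, 39); (2, 20)]; [:: (0, 24)]; [:: (0, 25)]; [:: (0, 26)]; [:: (0, 27)]; [:: (0, 28)]; [:: (0, 29); (1, 26)]; [:: (0, 30)]; [:: (0, 31); (1, 28)]; [:: (0, 32); (1, 35)]; [:: (0, 33)]; [:: (0, 34); (1, 37)]; [:: (0, 35)]; [:: (0, 36)]; [:: (0, 37)]; [:: (0, 38)]; [:: (0, 39)]; [:: (0, 40); (1, 38)]; [:: (0, 41); (1, 43)]; [:: (0, 42)]; [:: (0, 43)]; [:: (0, 44); (1, 51)]; [:: (0, 45); (1, 52)]; [:: (0, 46); (1, 44); (1, 50); (2, 51)]; [:: (0, 47)]; [:: (0, 48)]; [:: (0, 49); (1, 48)]; [:: (0, 50); (1, 51)]; [:: (0, 51)]; [:: (0, 52)]];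
      [:: [:: (0, 0); (1, 32)]; [:: (0, 1)]; [:: (0, 2); (1, 34); (2, 8)]; [:: (0, 3)]; [:: (0, 4)]; [:: (0, 5)]; [:: (0, 6)]; [:: (0, 7)]; [:: (0, 8)]; [:: (0, 9); (1, 43); (2, 12)]; [:: (0, 10)]; [:: (0, 11)]; [:: (0, 12)]; [:: (0, 13)]; [:: (0, 14)]; [:: (0, 15); (1, 48); (2, 5)]; [:: (0, 16)]; [:: (0, 17); (1, 45); (2, 3)]; [:: (0, 18)]; [:: (0, 19)]; [:: (0, 20); (1, 28); (2, 14)]; [:: (0, 21)]; [:: (0, 22)]; [:: (0, 23)]; [:: (0, 24); (1, 40); (2, 21)]; [:: (0, 25)]; [:: (0, 26); (1, 44); (1, 47); (2, 32)]; [:: (0, 27); (1, 49)]; [:: (0, 28)]; [:: (0, 29); (1, 46)]; [:: (0, 30)]; [:: (0, 31)]; [:: (0, 32)]; [:: (0, 33)]; [:: (0, 34)]; [:: (0, 35)]; [:: (0, 36); (1, 41)]; [:: (0, 37); (1, 42)]; [:: (0, 38); (1, 30)]; [:: (0, 39); (1, 31)]; [:: (0, 40)]; [:: (0, 41)]; [:: (0, 42)]; [:: (0, 43)]; [:: (0, 44); (1, 32)]; [:: (0, 45)]; [:: (0, 46)]; [:: (0, 47); (1, 32)]; [:: (0, 48)]; [:: (0, 49)]; [:: (0, 50)]; [:: (0, 51); (1, 35)]; [:: (0, 52); (1, 33)]];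
      [:: [:: (0, 0); (1, 33)]; [:: (0, 1)]; [:: (0, 2); (1, 36); (2, 10)]; [:: (0, 3)]; [:: (0, 4)]; [:: (0, 5)]; [:: (0, 6); (1, 42); (2, 12)]; [:: (0, 7)]; [:: (0, 8)]; [:: (0, 9)]; [:: (0, 10)]; [:: (0, 11)]; [:: (0, 12)]; [:: (0, 13)]; [:: (0, 14)]; [:: (0, 15); (1, 51); (2, 7)]; [:: (0, 16)]; [:: (0, 17)]; [:: (0, 18)]; [:: (0, 19); (1, 46); (2, 3)]; [:: (0, 20)]; [:: (0, 21)]; [:: (0, 22); (1, 30); (2, 14)]; [:: (0, 23)]; [:: (0, 24); (1, 39); (2, 18)]; [:: (0, 25)]; [:: (0, 26); (1, 52)]; [:: (0, 27); (1, 44); (1, 50); (2, 33)]; [:: (0, 28)]; [:: (0, 29); (1, 45)]; [:: (0, 30)]; [:: (0, 31)]; [:: (0, 32)]; [:: (0, 33)]; [:: (0, 34); (1, 41)]; [:: (0, 35)]; [:: (0, 36)]; [:: (0, 37); (1, 43)]; [:: (0, 38); (1, 28)]; [:: (0, 39)]; [:: (0, 40); (1, 31)]; [:: (0, 41)]; [:: (0, 42)]; [:: (0, 43)]; [:: (0, 44); (1, 33)]; [:: (0, 45)]; [:: (0, 46)]; [:: (0, 47)]; [:: (0, 48); (1, 35)]; [:: (0, 49); (1, 32)]; [:: (0, 50); (1, 33)]; [:: (0, 51)]; [:: (0, 52)]];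
      [:: [:: (0, 0); (1, 34)]; [:: (0, 1); (1, 34)]; [:: (0, 2)]; [:: (0, 3)]; [:: (0, 4)]; [:: (0, 5)]; [:: (0, 6)]; [:: (0, 7); (1, 43); (2, 13)]; [:: (0, 8)]; [:: (0, 9)]; [:: (0, 10)]; [:: (0, 11)]; [:: (0, 12)]; [:: (0, 13)]; [:: (0, 14); (1, 32); (2, 8)]; [:: (0, 15)]; [:: (0, 16); (1, 48); (2, 6)]; [:: (0, 17)]; [:: (0, 18); (1, 45); (2, 4)]; [:: (0, 19)]; [:: (0, 20); (1, 26); (2, 2)]; [:: (0, 21)]; [:: (0, 22)]; [:: (0, 23)]; [:: (0, 24)]; [:: (0, 25); (1, 40); (2, 19)]; [:: (0, 26)]; [:: (0, 27)]; [:: (0, 28); (1, 44); (1, 47); (2, 34)]; [:: (0, 29)]; [:: (0, 30); (1, 49)]; [:: (0, 31); (1, 46)]; [:: (0, 32)]; [:: (0, 33); (1, 41)]; [:: (0, 34)]; [:: (0, 35); (1, 42)]; [:: (0, 36)]; [:: (0, 37)]; [:: (0, 38); (1, 27)]; [:: (0, 39); (1, 29)]; [:: (0, 40)]; [:: (0, 41)]; [:: (0, 42)]; [:: (0, 43)]; [:: (0, 44)]; [:: (0, 45)]; [:: (0, 46)]; [:: (0, 47)]; [:: (0, 48)]; [:: (0, 49)]; [:: (0, 50); (1, 34)]; [:: (0, 51); (1, 37)]; [:: (0, 52); (1, 36)]];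
      [:: [:: (0, 0); (1, 35)]; [:: (0, 1)]; [:: (0, 2); (1, 37); (2, 11)]; [:: (0, 3)]; [:: (0, 4); (1, 41); (2, 12)]; [:: (0, 5)]; [:: (0, 6)]; [:: (0, 7)]; [:: (0, 8)]; [:: (0, 9)]; [:: (0, 10)]; [:: (0, 11)]; [:: (0, 12)]; [:: (0, 13)]; [:: (0, 14)]; [:: (0, 15)]; [:: (0, 16)]; [:: (0, 17); (1, 52); (2, 7)]; [:: (0, 18)]; [:: (0, 19); (1, 49); (2, 5)]; [:: (0, 20)]; [:: (0, 21)]; [:: (0, 22)]; [:: (0, 23); (1, 31); (2, 14)]; [:: (0, 24); (1, 38); (2, 16)]; [:: (0, 25)]; [:: (0, 26); (1, 51)]; [:: (0, 27); (1, 48)]; [:: (0, 28)]; [:: (0, 29); (1, 47); (1, 50); (2, 35)]; [:: (0, 30)]; [:: (0, 31)]; [:: (0, 32)]; [:: (0, 33)]; [:: (0, 34); (1, 42)]; [:: (0, 35)]; [:: (0, 36); (1, 43)]; [:: (0, 37)]; [:: (0, 38)]; [:: (0, 39); (1, 28)]; [:: (0, 40); (1, 30)]; [:: (0, 41)]; [:: (0, 42)]; [:: (0, 43)]; [:: (0, 44)]; [:: (0, 45); (1, 33)]; [:: (0, 46); (1, 32)]; [:: (0, 47); (1, 35)]; [:: (0, 48)]; [:: (0, 49)]; [:: (0, 50); (1, 35)]; [:: (0, 51)]; [:: (0, 52)]];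
      [:: [:: (0, 0); (1, 36)]; [:: (0, 1); (1, 36)]; [:: (0, 2)]; [:: (0, 3)]; [:: (0, 4)]; [:: (0, 5); (1, 42); (2, 13)]; [:: (0, 6)]; [:: (0, 7)]; [:: (0, 8)]; [:: (0, 9)]; [:: (0, 10)]; [:: (0, 11)]; [:: (0, 12)]; [:: (0, 13)]; [:: (0, 14); (1, 33); (2, 10)]; [:: (0, 15)]; [:: (0, 16); (1, 51); (2, 9)]; [:: (0, 17)]; [:: (0, 18)]; [:: (0, 19)]; [:: (0, 20)]; [:: (0, 21); (1, 46); (2, 4)]; [:: (0, 22); (1, 27); (2, 2)]; [:: (0, 23)]; [:: (0, 24)]; [:: (0, 25); (1, 39); (2, 17)]; [:: (0, 26)]; [:: (0, 27)]; [:: (0, 28); (1, 52)]; [:: (0, 29)]; [:: (0, 30); (1, 44); (1, 50); (2, 36)]; [:: (0, 31); (1, 45)]; [:: (0, 32); (1, 41)]; [:: (0, 33)]; [:: (0, 34)]; [:: (0, 35); (1, 43)]; [:: (0, 36)]; [:: (0, 37)]; [:: (0, 38); (1, 26)]; [:: (0, 39)]; [:: (0, 40); (1, 29)]; [:: (0, 41)]; [:: (0, 42)]; [:: (0, 43)]; [:: (0, 44)]; [:: (0, 45)]; [:: (0, 46)]; [:: (0, 47); (1, 36)]; [:: (0, 48); (1, 37)]; [:: (0, 49); (1, 34)]; [:: (0, 50)]; [:: (0, 51)]; [:: (0, 52)]];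
      [:: [:: (0, 0); (1, 37)]; [:: (0, 1); (1, 37)]; [:: (0, 2)]; [:: (0, 3); (1, 41); (2, 13)]; [:: (0, 4)]; [:: (0, 5)]; [:: (0, 6)]; [:: (0, 7)]; [:: (0, 8)]; [:: (0, 9)]; [:: (0, 10)]; [:: (0, 11)]; [:: (0, 12)]; [:: (0, 13)]; [:: (0, 14); (1, 35); (2, 11)]; [:: (0, 15)]; [:: (0, 16)]; [:: (0, 17)]; [:: (0, 18); (1, 52); (2, 9)]; [:: (0, 19)]; [:: (0, 20)]; [:: (0, 21); (1, 49); (2, 6)]; [:: (0, 22)]; [:: (0, 23); (1, 29); (2, 2)]; [:: (0, 24)]; [:: (0, 25); (1, 38); (2, 15)]; [:: (0, 26)]; [:: (0, 27)]; [:: (0, 28); (1, 51)]; [:: (0, 29)]; [:: (0, 30); (1, 48)]; [:: (0, 31); (1, 47); (1, 50); (2, 37)]; [:: (0, 32); (1, 42)]; [:: (0, 33); (1, 43)]; [:: (0, 34)]; [:: (0, 35)]; [:: (0, 36)]; [:: (0, 37)]; [:: (0, 38)]; [:: (0, 39); (1, 26)]; [:: (0, 40); (1, 27)]; [:: (0, 41)]; [:: (0, 42)]; [:: (0, 43)]; [:: (0, 44); (1, 37)]; [:: (0, 45); (1, 36)]; [:: (0, 46); (1, 34)]; [:: (0, 47)]; [:: (0, 48)]; [:: (0, 49)]; [:: (0, 50)]; [:: (0, 51)]; [:: (0, 52)]];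
      [:: [:: (0, 0)]; [:: (0, 1); (1, 41)]; [:: (0, 2)]; [:: (0, 3)]; [:: (0, 4)]; [:: (0, 5)]; [:: (0, 6)]; [:: (0, 7)]; [:: (0, 8)]; [:: (0, 9)]; [:: (0, 10)]; [:: (0, 11)]; [:: (0, 12)]; [:: (0, 13)]; [:: (0, 14)]; [:: (0, 15); (1, 37); (2, 13)]; [:: (0, 16); (1, 35); (2, 12)]; [:: (0, 17)]; [:: (0, 18)]; [:: (0, 19)]; [:: (0, 20); (1, 52); (2, 10)]; [:: (0, 21)]; [:: (0, 22); (1, 49); (2, 8)]; [:: (0, 23)]; [:: (0, 24); (1, 29); (2, 4)]; [:: (0, 25); (1, 31); (2, 3)]; [:: (0, 26); (1, 36)]; [:: (0, 27); (1, 34)]; [:: (0, 28); (1, 33)]; [:: (0, 29)]; [:: (0, 30); (1, 32)]; [:: (0, 31)]; [:: (0, 32)]; [:: (0, 33)]; [:: (0, 34)]; [:: (0, 35)]; [:: (0, 36)]; [:: (0, 37)]; [:: (0, 38); (1, 47); (1, 50); (2, 41)]; [:: (0, 39); (1, 45)]; [:: (0, 40); (1, 46)]; [:: (0, 41)]; [:: (0, 42)]; [:: (0, 43)]; [:: (0, 44); (1, 41)]; [:: (0, 45)]; [:: (0, 46)]; [:: (0, 47)]; [:: (0, 48); (1, 42)]; [:: (0, 49)]; [:: (0, 50)]; [:: (0, 51); (1, 43)]; [:: (0, 52)]];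
      [:: [:: (0, 0)]; [:: (0, 1); (1, 42)]; [:: (0, 2)]; [:: (0, 3)]; [:: (0, 4)]; [:: (0, 5)]; [:: (0, 6)]; [:: (0, 7)]; [:: (0, 8)]; [:: (0, 9)]; [:: (0, 10)]; [:: (0, 11)]; [:: (0, 12)]; [:: (0, 13)]; [:: (0, 14)]; [:: (0, 15)]; [:: (0, 16)]; [:: (0, 17); (1, 36); (2, 13)]; [:: (0, 18); (1, 33); (2, 12)]; [:: (0, 19)]; [:: (0, 20); (1, 51); (2, 11)]; [:: (0, 21)]; [:: (0, 22)]; [:: (0, 23); (1, 46); (2, 8)]; [:: (0, 24); (1, 27); (2, 6)]; [:: (0, 25); (1, 30); (2, 5)]; [:: (0, 26); (1, 37)]; [:: (0, 27)]; [:: (0, 28); (1, 35)]; [:: (0, 29); (1, 34)]; [:: (0, 30)]; [:: (0, 31); (1, 32)]; [:: (0, 32)]; [:: (0, 33)]; [:: (0, 34)]; [:: (0, 35)]; [:: (0, 36)]; [:: (0, 37)]; [:: (0, 38); (1, 48)]; [:: (0, 39); (1, 44); (1, 50); (2, 42)]; [:: (0, 40); (1, 49)]; [:: (0, 41)]; [:: (0, 42)]; [:: (0, 43)]; [:: (0, 44)]; [:: (0, 45); (1, 41)]; [:: (0, 46)]; [:: (0, 47); (1, 42)]; [:: (0, 48)]; [:: (0, 49)]; [:: (0, 50)]; [:: (0, 51)]; [:: (0, 52); (1, 43)]];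
      [:: [:: (0, 0)]; [:: (0, 1); (1, 43)]; [:: (0, 2)]; [:: (0, 3)]; [:: (0, 4)]; [:: (0, 5)]; [:: (0, 6)]; [:: (0, 7)]; [:: (0, 8)]; [:: (0, 9)]; [:: (0, 10)]; [:: (0, 11)]; [:: (0, 12)]; [:: (0, 13)]; [:: (0, 14)]; [:: (0, 15)]; [:: (0, 16)]; [:: (0, 17)]; [:: (0, 18)]; [:: (0, 19); (1, 34); (2, 13)]; [:: (0, 20)]; [:: (0, 21); (1, 32); (2, 12)]; [:: (0, 22); (1, 48); (2, 11)]; [:: (0, 23); (1, 45); (2, 10)]; [:: (0, 24); (1, 26); (2, 9)]; [:: (0, 25); (1, 28); (2, 7)]; [:: (0, 26)]; [:: (0, 27); (1, 37)]; [:: (0, 28)]; [:: (0, 29); (1, 36)]; [:: (0, 30); (1, 35)]; [:: (0, 31); (1, 33)]; [:: (0, 32)]; [:: (0, 33)]; [:: (0, 34)]; [:: (0, 35)]; [:: (0, 36)]; [:: (0, 37)]; [:: (0, 38); (1, 51)]; [:: (0, 39); (1, 52)]; [:: (0, 40); (1, 44); (1, 47); (2, 43)]; [:: (0, 41)]; [:: (0, 42)]; [:: (0, 43)]; [:: (0, 44)]; [:: (0, 45)]; [:: (0, 46); (1, 41)]; [:: (0, 47)]; [:: (0, 48)]; [:: (0, 49); (1, 42)]; [:: (0, 50); (1, 43)]; [:: (0, 51)]; [:: (0, 52)]]].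

Definition quadrics_transform (rows : seq tlin) (certs : seq (seq (nat * nat))) : bool :=
  all2 (fun q c => tquad_norm (quad_subst rows q) == tquad_norm (quad_comb quadrics c))
    quadrics certs.

Lemma quadric_certs_valid :
  all2 (fun a cs => quadrics_transform (xroot_rows a) cs) F4roots quadric_certs.
Proof. by vm_compute. Qed.

Lemma long_rootIdx : all (fun g => dims <= rootIdx g < dimg)%N longRoots.
Proof. by vm_compute. Qed.

Lemma quadrics_long_squarefree :
  all (fun g => all (fun f => (rootIdx g, rootIdx g) \notin f) quadrics) longRoots.
Proof. by vm_compute. Qed.

Lemma short_quadrics_shape :
  all (fun i => if nth [::] quadrics i is p :: f
                then (p == (i, i)) && all (fun p => (dims <= p.1)%N && (dims <= p.2)%N) f
                else false) (iota 0 dims).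
Proof. by vm_compute. Qed.

Lemma xroot_rows_gs_closed :
  all (fun a => all (fun i => all (fun u => dims <= u.1)%N (xroot_row a i)) (iota dims dims))
    F4roots.
Proof. by vm_compute. Qed.

Lemma inG_stable (F : fieldType) (P : 'cV[F]_dimg -> Prop) :
  (forall a t v, a \in F4roots -> P v -> P (xroot a t *m v)) ->
  forall g v, inG g -> P v -> P (g *m v).
Proof.
move=> Pstab g v; elim=> [|a t g' aR _ IH] Pv; first by rewrite mul1mx.
by rewrite -mulmxA; apply: Pstab (IH Pv).
Qed.

Lemma in_gs_cvnth (F : fieldType) (v : 'cV[F]_dimg) :
  in_gs v <-> forall j, (dims <= j)%N -> cvnth v j = 0.
Proof.
split=> [v0 j jge|v0 i ige]; last by rewrite -cvnthE v0.
by have [jlt|?] := ltnP j dimg; [rewrite (cvnthE v (Ordinal jlt)) v0 | rewrite cvnth_out].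
Qed.

Definition on_quadrics {F : fieldType} (v : 'cV[F]_dimg) : Prop :=
  forall f, f \in quadrics -> eval_quad (cvnth v) f = 0.

Section CharacteristicTwo.

Context {F : fieldType} (char2 : (2 \in [pchar F])%N).

Lemma sum_intr_pchar2 (C : nat -> int) (v : 'cV[F]_dimg) :
  \sum_(j < dimg) (C j)%:~R * v j 0 = \sum_(j <- iota 0 dimg | oddz (C j)) cvnth v j.
Proof.
rewrite (_ : iota 0 dimg = index_iota 0 dimg) // big_mkord [RHS]big_mkcond /=.
apply: eq_bigr => j _; rewrite intr_pchar2 // cvnthE.
by case: oddz; rewrite ?mul1r ?mul0r.
Qed.

Lemma cvnth_xroot a t (v : 'cV[F]_dimg) j :
  cvnth (xroot a t *m v) j = eval_tlin t (cvnth v) (nth [::] (xroot_rows a) j).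
Proof.
have [jlt|jge] := ltnP j dimg; last first.
  by rewrite cvnth_out // nth_default ?size_map ?size_iota // /eval_tlin big_nil.
rewrite (nth_map 0%N) ?size_iota // nth_iota // add0n.
have -> : j = Ordinal jlt by [].
rewrite cvnthE /xroot !mulmxDl mul1mx -!scalemxAl !mxE /adX /ad2X.
under eq_bigr do rewrite mxE.
under [X in _ + _ * X]eq_bigr do rewrite mxE.
by rewrite !sum_intr_pchar2 /xroot_row eval_tlin_row cvnthE.
Qed.

Lemma in_gs_xroot a t (v : 'cV[F]_dimg) :
  a \in F4roots -> in_gs v -> in_gs (xroot a t *m v).
Proof.
move=> aR /in_gs_cvnth v0; apply/in_gs_cvnth => j jge.
have [jlt|?] := ltnP j dimg; last by rewrite cvnth_out.
rewrite cvnth_xroot // (nth_map 0%N) ?size_iota // nth_iota // add0n.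
rewrite /eval_tlin big1_seq // => u /andP[_ uin]; rewrite v0 ?mulr0 //.
have /allP/(_ j) := allP xroot_rows_gs_closed a aR.
by rewrite mem_iota jge jlt => /(_ isT)/allP/(_ u uin).
Qed.

Lemma inG_gs {g : 'M[F]_dimg} {v} : inG g -> in_gs v -> in_gs (g *m v).
Proof. by move=> gG; apply: inG_stable gG => a t w aR; apply: in_gs_xroot. Qed.

Lemma on_quadrics_xroot a t (v : 'cV[F]_dimg) :
  a \in F4roots -> on_quadrics v -> on_quadrics (xroot a t *m v).
Proof.
move=> aR vQ f fQ.
have [cs acs] := all2_exists quadric_certs_valid aR.
have [c /eqP fc] := all2_exists acs fQ.
have -> : eval_quad (cvnth (xroot a t *m v)) f =
          eval_tquad t (cvnth v) (quad_subst (xroot_rows a) f).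
  by rewrite eval_quad_subst; apply: eq_bigr => p _; rewrite !cvnth_xroot.
rewrite -[LHS]eval_tquad_norm // fc.
rewrite eval_tquad_norm // eval_quad_comb big1 // => -[d m] _ /=.
have [mlt|mge] := ltnP m (size quadrics); first by rewrite vQ ?mulr0 ?mem_nth.
by rewrite nth_default // /eval_quad big_nil mulr0.
Qed.

Lemma on_quadrics_inG {g : 'M[F]_dimg} {v} :
  inG g -> on_quadrics v -> on_quadrics (g *m v).
Proof. by move=> gG; apply: inG_stable gG => a t w aR; apply: on_quadrics_xroot. Qed.

End CharacteristicTwo.

Section LongRootVectors.

Context {F : fieldType} {gam : seq int} (gL : gam \in longRoots).

Lemma cvnth_Xv j : cvnth (Xv F gam) j = (j == rootIdx gam)%:R.
Proof.
have /andP[_ rlt] := allP long_rootIdx gam gL.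
have [jlt|jge] := ltnP j dimg; first by rewrite (cvnthE _ (Ordinal jlt)) mxE.
rewrite cvnth_out // (_ : (j == _) = false) //.
by apply: contraTF jge => /eqP ->; rewrite -ltnNge.
Qed.

Lemma on_quadrics_Xv : on_quadrics (Xv F gam).
Proof.
move=> f fQ; apply: (@eval_quad_delta _ predT) => [j _||]; first exact: cvnth_Xv.
  by apply/allP.
exact: allP (allP quadrics_long_squarefree gam gL) f fQ.
Qed.

Lemma on_quadrics_long_congr {u : 'cV[F]_dimg} :
  on_quadrics u -> (forall j, (dims <= j)%N -> cvnth u j = (j == rootIdx gam)%:R) ->
  forall i, (i < dims)%N -> cvnth u i = 0.
Proof.
move=> uQ uq i ilt; have := allP short_quadrics_shape i; rewrite mem_iota ilt => /(_ isT).
case qi: (nth [::] quadrics i) => [|p f] // /andP[/eqP pii fD].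
have qiQ : p :: f \in quadrics.
  by rewrite -qi mem_nth // ltnNge; apply/negP => /(nth_default [::]); rewrite qi.
have rf : (rootIdx gam, rootIdx gam) \notin f.
  by have := allP (allP quadrics_long_squarefree gam gL) _ qiQ; rewrite inE negb_or => /andP[].
have := uQ _ qiQ; rewrite /eval_quad big_cons pii -/(eval_quad _ f).
rewrite (@eval_quad_delta _ (fun j => dims <= j)%N _ _ _ uq fD rf) addr0 /=.
by move/eqP; rewrite mulf_eq0 orbb => /eqP.
Qed.

End LongRootVectors.

Section Projection.

Context {F : fieldType}.

Definition gs_proj : 'M[F]_dimg := diag_mx (\row_(i < dimg) if (i < dims)%N then 1 else 0).

Lemma gs_projE (v : 'cV[F]_dimg) i : (gs_proj *m v) i 0 = if (i < dims)%N then v i 0 else 0.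
Proof. by rewrite mul_diag_mx !mxE; case: ifP; rewrite ?mul1r ?mul0r. Qed.

Lemma gs_proj_gs_to_V (v : 'cV[F]_dimg) : gs_proj *m v = gs_to_V v.
Proof. by apply/matrixP => i j; rewrite (ord1 j) gs_projE mxE. Qed.

Lemma compl_gs_projE (v : 'cV[F]_dimg) i :
  ((1%:M - gs_proj) *m v) i 0 = if (i < dims)%N then 0 else v i 0.
Proof. by rewrite mulmxBl mul1mx 2!mxE gs_projE; case: ifP; rewrite ?subrr ?subr0. Qed.

Lemma gs_proj_idem : gs_proj *m gs_proj = gs_proj.
Proof.
apply/matrixP => i j; rewrite mul_diag_mx !mxE.
by case: ifP; rewrite ?mul1r ?mul0r ?mul0rn.
Qed.

Lemma gs_proj_in_gs {v : 'cV[F]_dimg} : in_gs v -> gs_proj *m v = v.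
Proof.
move=> v0; apply/matrixP => i j; rewrite (ord1 j) gs_projE.
by case: ltnP => // ige; rewrite v0.
Qed.

Lemma gs_proj_Xv {gam} : gam \in longRoots -> gs_proj *m Xv F gam = 0.
Proof.
move=> gL; apply/matrixP => i j; rewrite (ord1 j) gs_projE !mxE.
case: ltnP => // ilt.
have /andP[rge _] := allP long_rootIdx gam gL.
by case: eqP => // ir; move: ilt; rewrite ir ltnNge rge.
Qed.

Lemma compl_gs_proj_diag :
  1%:M - gs_proj = diag_mx (\row_(i < dimg) if (i < dims)%N then 0 else 1).
Proof. by apply/matrixP => i j; rewrite !mxE; case: ifP; rewrite ?subrr ?mul0rn ?subr0. Qed.

Lemma actV_proj (g : 'M[F]_dimg) :
  actV g = gs_proj *m g *m gs_proj + (1%:M - gs_proj) *m g *m (1%:M - gs_proj).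
Proof.
apply/matrixP => i j; rewrite compl_gs_proj_diag !mul_mx_diag !mul_diag_mx !mxE.
by case: (i < dims)%N; case: (j < dims)%N;
  rewrite /= ?mul1r ?mulr1 ?mul0r ?mulr0 ?addr0 ?add0r.
Qed.

End Projection.

Lemma inG_Xv_congr {F : fieldType} {gam : seq int} {g : 'M[F]_dimg} :
  (2 \in [pchar F])%N -> gam \in longRoots -> inG g ->
  (1%:M - gs_proj) *m (g *m Xv F gam) = Xv F gam -> gs_proj *m (g *m Xv F gam) = 0.
Proof.
move=> char2 gL gG congr; set u := g *m Xv F gam in congr *.
have uQ : on_quadrics u := on_quadrics_inG char2 gG (on_quadrics_Xv gL).
have uq j : (dims <= j)%N -> cvnth u j = (j == rootIdx gam)%:R.
  move=> jge; rewrite -(cvnth_Xv gL) -congr.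
  have [jlt|?] := ltnP j dimg; last by rewrite !cvnth_out.
  by rewrite !(cvnthE _ (Ordinal jlt)) compl_gs_projE ltnNge jge.
apply/matrixP => i j; rewrite (ord1 j) gs_projE [RHS]mxE.
by case: ltnP => // ilt; rewrite -cvnthE (on_quadrics_long_congr gL uQ uq).
Qed.

Theorem mainTheorem18 (k : closedFieldType) (char2 : (2 \in [pchar k])%N)
  (alg_over_F2 : forall a : k, exists n : nat, (0 < n)%N /\ a ^+ (2 ^ n) = a)
  (gam : seq int) (hgam : gam \in longRoots)
  (x : 'cV[k]_dimg) (hx : in_gs x) (lam : k) :
  forall g : 'M[k]_dimg,
    stab_g (x + lam *: Xv k gam) g <-> stab_V (gs_to_V x + lam *: vV k gam) g.
Proof.
move=> g; rewrite /stab_g /stab_V -gs_proj_gs_to_V (gs_proj_in_gs hx) actV_proj.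
have block gG := stab_block_diag gs_proj_idem (gs_proj_in_gs hx) (gs_proj_Xv hgam)
  (gs_proj_in_gs (inG_gs char2 gG hx)) (inG_Xv_congr char2 hgam gG).
by split=> -[gG fixw]; split=> //; apply/(block g lam gG).
Qed.
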